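(* $P_4$ divides $Q_q$ for every integer $q\geq 4$, and $P_8$ divides $Q_q$ for every integer $q\geq 8$.
   Context: $Q_q$ denotes the $q$-dimensional hypercube graph (vertices are $q$-tuples of $0$'s and $1$'s, adjacent iff they differ in exactly one coordinate). $P_m$ denotes the path with $m$ edges. For graphs $H$ and $G$, ''$H$ divides $G$'' means there is a collection of subgraphs $H_i$ of $G$, each isomorphic to $H$, such that $E(G)$ is the disjoint union of the edge sets $E(H_i)$. *)

From mathcomp Require Import all_boot.
Set Implicit Arguments. Unset Strict Implicit. Unset Printing Implicit Defensive.

(* A simple graph is a symmetric irreflexive relation on a finite vertex type. *)

Definition edges (V : finType) (g : rel V) : {set {set V}} :=
  [set [set x; y] | x in V, y in V & g x y].

Definition emb_edges (V1 V2 : finType) (h : rel V1) (f : V1 -> V2)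
  : {set {set V2}} :=
  [set [set f x; f y] | x in V1, y in V1 & h x y].

(* f is an injective graph homomorphism H -> G; its image is a subgraph of G
   isomorphic to H (with edge set emb_edges h f), and every subgraph of G
   isomorphic to H arises this way. *)
Definition embedding (V1 V2 : finType) (h : rel V1) (g : rel V2)
  (f : V1 -> V2) : Prop :=
  injective f /\ (forall x y, h x y -> g (f x) (f y)).

Definition divides (V1 V2 : finType) (h : rel V1) (g : rel V2) : Prop :=
  exists (n : nat) (fs : 'I_n -> V1 -> V2),
    (forall i, embedding h g (fs i)) /\
    (forall i j, i != j -> [disjoint emb_edges h (fs i) & emb_edges h (fs j)]) /\
    \bigcup_(i < n) emb_edges h (fs i) = edges g.

Definition cube_rel (q : nat) : rel {ffun 'I_q -> bool} :=
  fun u v => #|[set i | u i != v i]| == 1.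

(* Path P_m with m edges: vertices 0..m, i ~ i+1. *)
Definition path_rel (m : nat) : rel 'I_m.+1 :=
  fun i j => (i.+1 == j :> nat) || (j.+1 == i :> nat).
Arguments path_rel m : clear implicits.
Arguments cube_rel q : clear implicits.

(* Q_(a+b) is the Cartesian product of Q_a and Q_b: two vertices are adjacent iff they agree
   on one block of coordinates and are adjacent on the other.  So if a graph H decomposes both
   Q_a and Q_b, copying the decomposition of Q_a into every layer Q_a x {w} and that of Q_b into
   every layer {u} x Q_b decomposes Q_(a+b).  The q for which P_m divides Q_q are therefore
   closed under addition, and the theorem reduces to the base cases P_4 | Q_q for q = 4,...,7
   and P_8 | Q_q for q = 4, 6, 9, 11 (8 = 4 + 4, 10 = 4 + 6), which are checked by computation
   on explicit decompositions. *)

From Stdlib Require Import BinNat.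
From mathcomp Require Import all_boot all_order zify.
Set Implicit Arguments. Unset Strict Implicit. Unset Printing Implicit Defensive.

Lemma set2_eq (T : finType) (a b c d : T) :
  [set a; b] = [set c; d] -> (a = c /\ b = d) \/ (a = d /\ b = c).
Proof.
move=> E.
have : a \in [set c; d] by rewrite -E set21.
have : b \in [set c; d] by rewrite -E set22.
move=> /set2P [] Eb /set2P [] Ea; subst a b; auto.
- have : d \in [set c; c] by rewrite E set22.
  by move=> /set2P [] ->; auto.
- have : c \in [set d; d] by rewrite E set21.
  by move=> /set2P [] ->; auto.
Qed.

Lemma uniq_map_inj_in (T1 T2 : eqType) (f : T1 -> T2) s :
  uniq (map f s) -> {in s &, injective f}.
Proof.
elim: s => [|x s IHs] //= /andP [fx_notin Us] y z.
rewrite !inE => /predU1P [-> | ys] /predU1P [-> | zs] // E.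
- by move: fx_notin; rewrite E map_f.
- by move: fx_notin; rewrite -E map_f.
- exact: IHs.
Qed.

Section Decomposition.
Variables (V W : finType) (h : rel V) (g : rel W).

(* [divides h g] with the pieces indexed by a finite type and the edges oriented. *)
Definition decomposition (I : finType) (fs : I -> V -> W) : Prop :=
  [/\ forall i, embedding h g (fs i),
      forall u v, g u v -> exists i x y, [/\ h x y, fs i x = u & fs i y = v] &
      forall i j x y x' y', h x y -> h x' y' ->
        fs i x = fs j x' -> fs i y = fs j y' -> i = j].

Lemma decomposition_divides (I : finType) (fs : I -> V -> W) :
  symmetric h -> decomposition fs -> divides h g.
Proof.
move=> hC [emb cover unique].
exists #|I|, (fun k => fs (enum_val k)); split; [|split].
- by move=> k; apply: emb.
- move=> k k' nkk'; rewrite -setI_eq0; apply/eqP/setP => e; rewrite !inE.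
  apply/negbTE/negP; case/andP.
  case/imset2P=> x y _; rewrite inE => hxy ->.
  case/imset2P=> x' y' _; rewrite inE => hxy'.
  case/set2_eq=> [[E1 E2]|[E1 E2]]; move/eqP: nkk'; apply; apply: enum_val_inj.
  + exact: unique hxy hxy' E1 E2.
  + by rewrite hC in hxy'; apply: unique hxy hxy' E1 E2.
- apply/setP => e; apply/bigcupP/imset2P.
  + case=> k _ /imset2P [x y _]; rewrite inE => hxy ->.
    by exists (fs (enum_val k) x) (fs (enum_val k) y); rewrite ?inE //; apply: (emb _).2.
  + case=> u v _; rewrite inE => /cover [i [x [y [hxy <- <-]]]] ->.
    exists (enum_rank i) => //; rewrite enum_rankK.
    by apply/imset2P; exists x y; rewrite ?inE.
Qed.

End Decomposition.

Lemma path_rel_sym m : symmetric (path_rel m).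
Proof. by move=> x y; rewrite /path_rel orbC. Qed.

Lemma path_rel_irr m : irreflexive (path_rel m).
Proof. by move=> x; rewrite /path_rel orbb; apply/eqP; lia. Qed.

Lemma path_rel_step m (x y : 'I_m.+1) : path_rel m x y -> exists2 t, t < m &
  (x = t :> nat /\ y = t.+1 :> nat) \/ (x = t.+1 :> nat /\ y = t :> nat).
Proof.
case/orP=> /eqP E; [exists x; [|left] | exists y; [|right]]; move: (ltn_ord x) (ltn_ord y); lia.
Qed.

Definition hamming n (u v : {ffun 'I_n -> bool}) : nat := #|[set i | u i != v i]|.

Lemma hamming_eq0 n (u v : {ffun 'I_n -> bool}) : (hamming u v == 0) = (u == v).
Proof.
rewrite /hamming cards_eq0; apply/eqP/eqP => [E|->].
- apply/ffunP=> i; apply/eqP/negPn/negP => Ei.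
  by have := in_set0 i; rewrite -E inE Ei.
- by apply/setP=> i; rewrite !inE eqxx.
Qed.

Lemma hamming_xx n (u : {ffun 'I_n -> bool}) : hamming u u = 0.
Proof. by apply/eqP; rewrite hamming_eq0. Qed.

Lemma cube_relE n (u v : {ffun 'I_n -> bool}) : cube_rel n u v = (hamming u v == 1).
Proof. by []. Qed.

Lemma cube_rel_sym n : symmetric (cube_rel n).
Proof.
move=> u v; rewrite !cube_relE /hamming.
by under eq_finset do rewrite eq_sym.
Qed.

Lemma cube_rel_irr n : irreflexive (cube_rel n).
Proof. by move=> u; rewrite cube_relE hamming_xx. Qed.

Section CubeProduct.
Variables a b : nat.

Definition cube_join (u : {ffun 'I_a -> bool}) (w : {ffun 'I_b -> bool})
    : {ffun 'I_(a + b) -> bool} :=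
  [ffun i => match split i with inl j => u j | inr k => w k end].
Definition cube_lproj (v : {ffun 'I_(a + b) -> bool}) : {ffun 'I_a -> bool} :=
  [ffun j => v (lshift b j)].
Definition cube_rproj (v : {ffun 'I_(a + b) -> bool}) : {ffun 'I_b -> bool} :=
  [ffun k => v (rshift a k)].

Lemma cube_lproj_join u w : cube_lproj (cube_join u w) = u.
Proof. by apply/ffunP=> j; rewrite !ffunE (unsplitK (inl _ j)). Qed.

Lemma cube_rproj_join u w : cube_rproj (cube_join u w) = w.
Proof. by apply/ffunP=> k; rewrite !ffunE (unsplitK (inr _ k)). Qed.

Lemma cube_joinK v : cube_join (cube_lproj v) (cube_rproj v) = v.
Proof. by apply/ffunP=> i; rewrite !ffunE -{2}(splitK i); case: (split i) => j; rewrite ffunE. Qed.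

Lemma hamming_split v v' :
  hamming v v' = hamming (cube_lproj v) (cube_lproj v') + hamming (cube_rproj v) (cube_rproj v').
Proof.
rewrite /hamming -!sum1_card big_split_ord /=.
by congr (_ + _); apply: eq_bigl => j; rewrite !inE !ffunE.
Qed.

Lemma cube_rel_joinl u u' w : cube_rel (a + b) (cube_join u w) (cube_join u' w) = cube_rel a u u'.
Proof.
by rewrite !cube_relE hamming_split !cube_lproj_join !cube_rproj_join hamming_xx addn0.
Qed.

Lemma cube_rel_joinr u w w' : cube_rel (a + b) (cube_join u w) (cube_join u w') = cube_rel b w w'.
Proof.
by rewrite !cube_relE hamming_split !cube_lproj_join !cube_rproj_join hamming_xx.
Qed.

Lemma cube_rel_split v v' : cube_rel (a + b) v v' ->
  (cube_rproj v = cube_rproj v' /\ cube_rel a (cube_lproj v) (cube_lproj v')) \/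
  (cube_lproj v = cube_lproj v' /\ cube_rel b (cube_rproj v) (cube_rproj v')).
Proof.
rewrite !cube_relE hamming_split.
case El: (hamming (cube_lproj v) (cube_lproj v')) => [|nl] /=.
  by move=> H; right; split=> //; apply/eqP; rewrite -hamming_eq0 El.
case Er: (hamming (cube_rproj v) (cube_rproj v')) => [|nr]; last by rewrite addnS.
by rewrite addn0 => H; left; split=> //; apply/eqP; rewrite -hamming_eq0 Er.
Qed.

End CubeProduct.

Arguments cube_join {a b}.
Arguments cube_lproj {a b}.
Arguments cube_rproj {a b}.

Section ProductDecomposition.
Variables (V : finType) (h : rel V) (a b : nat) (I1 I2 : finType).
Variables (f1 : I1 -> V -> {ffun 'I_a -> bool}) (f2 : I2 -> V -> {ffun 'I_b -> bool}).
Hypotheses (h_irr : irreflexive h)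
  (dec1 : decomposition h (cube_rel a) f1) (dec2 : decomposition h (cube_rel b) f2).

Definition layer_piece (p : (I1 * {ffun 'I_b -> bool}) + (I2 * {ffun 'I_a -> bool}))
    (x : V) : {ffun 'I_(a + b) -> bool} :=
  match p with
  | inl (i, w) => cube_join (f1 i x) w
  | inr (j, u) => cube_join u (f2 j x)
  end.

Lemma layer_piece_embedding p : embedding h (cube_rel (a + b)) (layer_piece p).
Proof.
case: dec1 dec2 => emb1 _ _ [emb2 _ _]; case: p => [[i w]|[j u]]; split=> [x y|x y hxy] /=.
- by move/(congr1 cube_lproj); rewrite !cube_lproj_join; apply: (emb1 i).1.
- by rewrite cube_rel_joinl; apply: (emb1 i).2.
- by move/(congr1 cube_rproj); rewrite !cube_rproj_join; apply: (emb2 j).1.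
- by rewrite cube_rel_joinr; apply: (emb2 j).2.
Qed.

Lemma layer_piece_cover v v' : cube_rel (a + b) v v' ->
  exists p x y, [/\ h x y, layer_piece p x = v & layer_piece p y = v'].
Proof.
case: dec1 dec2 => _ cover1 _ [_ cover2 _].
case/cube_rel_split=> [[E /cover1 [i [x [y [hxy Ex Ey]]]]]|[E /cover2 [j [x [y [hxy Ex Ey]]]]]].
- by exists (inl (i, cube_rproj v)), x, y; rewrite /= Ex Ey cube_joinK E cube_joinK.
- by exists (inr (j, cube_lproj v)), x, y; rewrite /= Ex Ey cube_joinK E cube_joinK.
Qed.

Lemma layer_piece_unique p p' x y x' y' : h x y -> h x' y' ->
  layer_piece p x = layer_piece p' x' -> layer_piece p y = layer_piece p' y' -> p = p'.
Proof.
case: dec1 dec2 => emb1 _ uniq1 [emb2 _ uniq2] hxy hxy'.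
have hxy_neq : x != y by apply: contraTneq hxy => ->; rewrite h_irr.
case: p p' => [[i w]|[j u]] [[i' w']|[j' u']] /= Ex Ey.
- have := congr1 cube_rproj Ex; rewrite !cube_rproj_join => <-.
  move: Ex Ey => /(congr1 cube_lproj) + /(congr1 cube_lproj); rewrite !cube_lproj_join.
  by move=> Ex Ey; rewrite (uniq1 _ _ _ _ _ _ hxy hxy' Ex Ey).
- move: Ex Ey => /(congr1 cube_lproj) + /(congr1 cube_lproj); rewrite !cube_lproj_join.
  by move=> <- /(emb1 i).1 Exy; rewrite Exy eqxx in hxy_neq.
- move: Ex Ey => /(congr1 cube_rproj) + /(congr1 cube_rproj); rewrite !cube_rproj_join.
  by move=> <- /(emb2 j).1 Exy; rewrite Exy eqxx in hxy_neq.
- have := congr1 cube_lproj Ex; rewrite !cube_lproj_join => <-.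
  move: Ex Ey => /(congr1 cube_rproj) + /(congr1 cube_rproj); rewrite !cube_rproj_join.
  by move=> Ex Ey; rewrite (uniq2 _ _ _ _ _ _ hxy hxy' Ex Ey).
Qed.

Lemma layer_piece_decomposition : decomposition h (cube_rel (a + b)) layer_piece.
Proof.
split; [exact: layer_piece_embedding | exact: layer_piece_cover | exact: layer_piece_unique].
Qed.

End ProductDecomposition.

Definition cube_decomposable (V : finType) (h : rel V) (q : nat) : Prop :=
  exists (I : finType) (fs : I -> V -> {ffun 'I_q -> bool}), decomposition h (cube_rel q) fs.

Lemma cube_decomposable_add (V : finType) (h : rel V) a b : irreflexive h ->
  cube_decomposable h a -> cube_decomposable h b -> cube_decomposable h (a + b).
Proof.
move=> h_irr [I1 [f1 dec1]] [I2 [f2 dec2]].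
by exists _, (layer_piece f1 f2); apply: layer_piece_decomposition.
Qed.

Lemma cube_decomposable_divides (V : finType) (h : rel V) q :
  symmetric h -> cube_decomposable h q -> divides h (cube_rel q).
Proof. by move=> hC [I [fs dec]]; apply: decomposition_divides dec. Qed.

Lemma cube_decomposable_from (V : finType) (h : rel V) s b : irreflexive h ->
  cube_decomposable h s -> 0 < s -> (forall q, b <= q < b + s -> cube_decomposable h q) ->
  forall q, b <= q -> cube_decomposable h q.
Proof.
move=> h_irr dec_s s_gt0 dec_base; elim/ltn_ind=> q IHq le_bq.
have [lt_q|le_q] := ltnP q (b + s); first by apply: dec_base; rewrite le_bq.
rewrite -(subnK (leq_trans (leq_addl b s) le_q)).
by apply: cube_decomposable_add => //; apply: IHq; lia.
Qed.

Definition cube_of_bits q (s : seq bool) : {ffun 'I_q -> bool} := [ffun i : 'I_q => nth false s i].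

Lemma cube_of_bitsK q (u : {ffun 'I_q -> bool}) : cube_of_bits q (fgraph u) = u.
Proof. by apply/ffunP=> i; rewrite ffunE nth_fgraph_ord. Qed.

Lemma size_fgraph_cube q (u : {ffun 'I_q -> bool}) : size (fgraph u) = q.
Proof. by rewrite size_tuple card_ord. Qed.

Lemma cube_of_bits_inj q s t : size s = q -> size t = q ->
  cube_of_bits q s = cube_of_bits q t -> s = t.
Proof.
move=> Hs Ht E; apply: (@eq_from_nth _ false); first by rewrite Hs Ht.
rewrite Hs => i Hi.
by have := congr1 (fun u : {ffun _ -> _} => u (Ordinal Hi)) E; rewrite !ffunE.
Qed.

Definition flip (s : seq bool) (k : nat) : seq bool := set_nth false s k (~~ nth false s k).

Lemma size_flip s k : k < size s -> size (flip s k) = size s.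
Proof. by move=> Hk; rewrite size_set_nth; apply/maxn_idPr. Qed.

Lemma nth_flip s k i : nth false (flip s k) i = (i == k) (+) nth false s i.
Proof. by rewrite nth_set_nth /=; case: eqP => [->|]. Qed.

Lemma cube_rel_flip q s k : k < q ->
  cube_rel q (cube_of_bits q s) (cube_of_bits q (flip s k)).
Proof.
move=> Hk; apply/cards1P; exists (Ordinal Hk); apply/setP=> i.
rewrite !inE !ffunE nth_flip -[i == _]/(val i == k).
by case: (val i == k); case: (nth _ _ _).
Qed.

Lemma fgraph_cube_rel q (u v : {ffun 'I_q -> bool}) : cube_rel q u v ->
  exists2 k, k < q & fgraph v = flip (fgraph u) k :> seq bool.
Proof.
case/cards1P=> k Hk; exists k => //.
apply: (@eq_from_nth _ false); first by rewrite size_flip !size_fgraph_cube.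
rewrite size_fgraph_cube => i Hi.
have -> : i = Ordinal Hi by [].
rewrite nth_flip !nth_fgraph_ord.
have := congr1 (fun A : {set 'I_q} => Ordinal Hi \in A) Hk.
rewrite /= !inE -[Ordinal Hi == k]/(i == k).
by case: (i == k) => [|/negbFE/eqP //]; case: (u _); case: (v _).
Qed.

Section Certificate.
Import Order.TTheory Order.DefaultSeqLexiOrder Order.DefaultProdLexiOrder.

Fixpoint bitseqs n : seq (seq bool) :=
  if n is n'.+1 then [seq b :: s | b <- [:: false; true], s <- bitseqs n'] else [:: [::]].

Lemma mem_bitseqs n s : size s = n -> s \in bitseqs n.
Proof.
elim: n s => [|n IHn] [|x s] //= [/IHn Hs].
by case: x; rewrite !mem_cat map_f ?orbT.
Qed.

Definition edge_key (s t : seq bool) : seq bool * seq bool := (Order.min s t, Order.max s t).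

Lemma edge_keyC s t : edge_key s t = edge_key t s.
Proof. by rewrite /edge_key minC maxC. Qed.

Lemma edge_key_inj s t s' t' : edge_key s t = edge_key s' t' ->
  (s = s' /\ t = t') \/ (s = t' /\ t = s').
Proof.
rewrite /edge_key !minEle !maxEle.
by do 2 case: ifP => _; case=> -> ->; [left|right|right|left].
Qed.

Definition cube_edges q : seq (seq bool * seq bool) :=
  [seq e <- [seq (s, flip s k) | s <- bitseqs q, k <- iota 0 q] | (e.1 < e.2)%O].

Lemma mem_cube_edges q (u v : {ffun 'I_q -> bool}) :
  cube_rel q u v -> edge_key (fgraph u) (fgraph v) \in cube_edges q.
Proof.
wlog lt_uv : u v / (fgraph u < fgraph v :> seq bool)%O => [wlog_uv uv|uv].
  case: (ltgtP (fgraph u : seq bool) (fgraph v)) => [lt_uv|gt_uv|eq_uv].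
  - exact: wlog_uv.
  - by rewrite edge_keyC; apply: wlog_uv; rewrite // cube_rel_sym.
  - have Euv : u = v by rewrite -(cube_of_bitsK u) eq_uv cube_of_bitsK.
    by rewrite Euv cube_rel_irr in uv.
have [k lt_kq Ev] := fgraph_cube_rel uv.
rewrite /edge_key min_l ?max_r ?ltW // mem_filter /= lt_uv Ev.
apply: (allpairs_f (fun s k => (s, flip s k))); last by rewrite mem_iota.
exact/mem_bitseqs/size_fgraph_cube.
Qed.

Variables (q m : nat) (D : seq (seq (seq bool))).

Definition adjacent_bits (s t : seq bool) : bool := has (fun k => t == flip s k) (iota 0 q).

Definition path_ok (p : seq (seq bool)) : bool :=
  [&& size p == m.+1, all (fun s => size s == q) p, uniq p &
      all (fun j => adjacent_bits (nth [::] p j) (nth [::] p j.+1)) (iota 0 m)].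

Definition certificate_edge (it : nat * nat) : seq bool * seq bool :=
  edge_key (nth [::] (nth [::] D it.1) it.2) (nth [::] (nth [::] D it.1) it.2.+1).

Definition certificate_edges : seq (seq bool * seq bool) :=
  map certificate_edge [seq (i, t) | i <- iota 0 (size D), t <- iota 0 m].

(* The path edges, keyed by their ordered endpoints, must list every edge of Q_q exactly once;
   comparing sorted lists keeps this check quasi-linear. *)
Definition certificate : bool :=
  all path_ok D &&
  (let E := sort <=%O certificate_edges in
   sorted <%O E && (E == sort <=%O (cube_edges q))).

Hypothesis cert : certificate.

Definition certificate_piece (i : 'I_(size D)) (x : 'I_m.+1) : {ffun 'I_q -> bool} :=
  cube_of_bits q (nth [::] (nth [::] D i) x).

Lemma certificate_path_ok (i : 'I_(size D)) : path_ok (nth [::] D i).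
Proof. by case/andP: cert => /(all_nthP [::]) ok _; apply: ok. Qed.

Lemma size_certificate_vertex (i : 'I_(size D)) x : x < m.+1 ->
  size (nth [::] (nth [::] D i) x) = q.
Proof.
case/and4P: (certificate_path_ok i) => /eqP p_size /allP p_bits _ _ lt_x.
by apply/eqP/p_bits/mem_nth; rewrite p_size.
Qed.

Lemma certificate_edges_uniq : uniq certificate_edges.
Proof. by case/andP: cert => _ /andP [/lt_sorted_uniq]; rewrite sort_uniq. Qed.

Lemma mem_certificate_edges e : e \in cube_edges q -> e \in certificate_edges.
Proof. by case/andP: cert => _ /andP [_ /eqP E] e_in; rewrite -(mem_sort <=%O) E mem_sort. Qed.

Lemma adjacent_bits_cube_rel s t :
  adjacent_bits s t -> cube_rel q (cube_of_bits q s) (cube_of_bits q t).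
Proof. by case/hasP=> k; rewrite mem_iota => /andP [_ lt_kq] /eqP ->; apply: cube_rel_flip. Qed.

Lemma certificate_edge_of_path_rel (i : 'I_(size D)) x y : path_rel m x y ->
  exists2 t, t < m &
    edge_key (nth [::] (nth [::] D i) x) (nth [::] (nth [::] D i) y) = certificate_edge (val i, t).
Proof.
by case/path_rel_step=> t lt_tm [[-> ->]|[-> ->]]; exists t; rewrite // edge_keyC.
Qed.

Lemma certificate_piece_embedding i :
  embedding (path_rel m) (cube_rel q) (certificate_piece i).
Proof.
case/and4P: (certificate_path_ok i) => /eqP p_size _ p_uniq /allP p_adj; split.
- move=> x y /cube_of_bits_inj E; apply/val_inj/eqP.
  rewrite -(nth_uniq [::] _ _ p_uniq) ?p_size ?ltn_ord //.
  by rewrite E // size_certificate_vertex.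
- move=> x y /path_rel_step [t lt_tm [[Ex Ey]|[Ex Ey]]]; last rewrite cube_rel_sym.
  all: rewrite /certificate_piece Ex Ey; apply/adjacent_bits_cube_rel/p_adj.
  all: by rewrite mem_iota add0n lt_tm.
Qed.

Lemma certificate_piece_cover u v : cube_rel q u v -> exists i x y,
  [/\ path_rel m x y, certificate_piece i x = u & certificate_piece i y = v].
Proof.
move=> uv; case/mapP: (mem_certificate_edges (mem_cube_edges uv)) => it.
case/allpairsP => -[i t] /= [+ + ->]; rewrite !mem_iota /= => lt_i lt_t.
have lt_t0 : t < m.+1 by apply: ltnW.
have lt_t1 : t.+1 < m.+1 by [].
rewrite /certificate_piece; case/edge_key_inj=> -[Eu Ev].
- exists (Ordinal lt_i), (Ordinal lt_t0), (Ordinal lt_t1).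
  by rewrite /path_rel /= eqxx -Eu -Ev !cube_of_bitsK.
- exists (Ordinal lt_i), (Ordinal lt_t1), (Ordinal lt_t0).
  by rewrite /path_rel /= eqxx orbT -Eu -Ev !cube_of_bitsK.
Qed.

Lemma certificate_piece_unique i j x y x' y' : path_rel m x y -> path_rel m x' y' ->
  certificate_piece i x = certificate_piece j x' ->
  certificate_piece i y = certificate_piece j y' -> i = j.
Proof.
have vsize k (z : 'I_m.+1) := size_certificate_vertex k (ltn_ord z).
move=> hxy hxy' /(cube_of_bits_inj (vsize _ _) (vsize _ _)) Ex.
move=> /(cube_of_bits_inj (vsize _ _) (vsize _ _)) Ey.
have [t lt_tm Et] := certificate_edge_of_path_rel i hxy.
have [t' lt_t'm Et'] := certificate_edge_of_path_rel j hxy'.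
rewrite Ex Ey Et' in Et.
have mem_edge k r : k < size D -> r < m ->
    (k, r) \in [seq (i, t) | i <- iota 0 (size D), t <- iota 0 m].
  by move=> lt_k lt_r; apply: allpairs_f; rewrite mem_iota.
have := uniq_map_inj_in certificate_edges_uniq
  (mem_edge _ _ (ltn_ord j) lt_t'm) (mem_edge _ _ (ltn_ord i) lt_tm) Et.
by case=> /val_inj ->.
Qed.

Lemma certificate_decomposition :
  decomposition (path_rel m) (cube_rel q) certificate_piece.
Proof.
split; [exact: certificate_piece_embedding | exact: certificate_piece_cover |
        exact: certificate_piece_unique].
Qed.

End Certificate.

Lemma cube_decomposable_certificate q m D :
  certificate q m D -> cube_decomposable (path_rel m) q.
Proof. by move=> cert; exists _, (@certificate_piece q m D); apply: certificate_decomposition. Qed.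

Definition bits_of_N q (c : N) : seq bool := mkseq (fun i => N.testbit c (N.of_nat i)) q.

(* Each list below is a list of paths, each path given by its sequence of vertices; a vertex of
   Q_q is written as the q-bit number whose bit i is its coordinate i. *)
Local Open Scope N_scope.
Definition paths4_cube4 : seq (seq N) := [::
[:: 0; 1; 3; 7; 15];
[:: 14; 15; 13; 9; 1];
[:: 4; 6; 14; 12; 8];
[:: 10; 8; 0; 2; 6];
[:: 6; 7; 5; 4; 0];
[:: 8; 9; 11; 10; 14];
[:: 4; 12; 13; 5; 1];
[:: 10; 2; 3; 11; 15]].
Definition paths4_cube5 : seq (seq N) := [::
[:: 0; 1; 9; 25; 29];
[:: 14; 15; 7; 23; 19];
[:: 19; 18; 26; 10; 14];
[:: 29; 28; 20; 4; 0];
[:: 1; 17; 16; 0; 2];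
[:: 15; 31; 30; 14; 12];
[:: 18; 2; 3; 19; 17];
[:: 28; 12; 13; 29; 31];
[:: 3; 11; 10; 8; 0];
[:: 13; 5; 4; 6; 14];
[:: 16; 24; 25; 27; 19];
[:: 30; 22; 23; 21; 29];
[:: 5; 1; 3; 7; 6];
[:: 11; 15; 13; 9; 8];
[:: 22; 18; 16; 20; 21];
[:: 24; 28; 30; 26; 27];
[:: 4; 12; 8; 24; 26];
[:: 10; 2; 6; 22; 20];
[:: 23; 31; 27; 11; 9];
[:: 25; 17; 21; 5; 7]].
Definition paths4_cube6 : seq (seq N) := [::
[:: 0; 1; 9; 25; 29];
[:: 14; 15; 7; 23; 19];
[:: 19; 18; 26; 10; 14];
[:: 29; 28; 20; 4; 0];
[:: 39; 38; 46; 62; 58];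
[:: 41; 40; 32; 48; 52];
[:: 52; 53; 61; 45; 41];
[:: 58; 59; 51; 35; 39];
[:: 4; 6; 7; 39; 37];
[:: 10; 8; 9; 41; 43];
[:: 23; 21; 20; 52; 54];
[:: 25; 27; 26; 58; 56];
[:: 35; 33; 32; 0; 2];
[:: 45; 47; 46; 14; 12];
[:: 48; 50; 51; 19; 17];
[:: 62; 60; 61; 29; 31];
[:: 2; 18; 16; 0; 8];
[:: 12; 28; 30; 14; 6];
[:: 17; 1; 3; 19; 27];
[:: 31; 15; 13; 29; 21];
[:: 37; 53; 55; 39; 47];
[:: 43; 59; 57; 41; 33];
[:: 54; 38; 36; 52; 60];
[:: 56; 40; 42; 58; 50];
[:: 6; 2; 34; 35; 3];
[:: 8; 12; 44; 45; 13];
[:: 21; 17; 49; 48; 16];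
[:: 27; 31; 63; 62; 30];
[:: 33; 37; 5; 4; 36];
[:: 47; 43; 11; 10; 42];
[:: 50; 54; 22; 23; 55];
[:: 60; 56; 24; 25; 57];
[:: 1; 33; 49; 51; 55];
[:: 15; 47; 63; 61; 57];
[:: 18; 50; 34; 32; 36];
[:: 28; 60; 44; 46; 42];
[:: 38; 6; 22; 20; 16];
[:: 40; 8; 24; 26; 30];
[:: 53; 21; 5; 7; 3];
[:: 59; 27; 11; 9; 13];
[:: 4; 12; 13; 5; 1];
[:: 10; 2; 3; 11; 15];
[:: 23; 31; 30; 22; 18];
[:: 25; 17; 16; 24; 28];
[:: 35; 43; 42; 34; 38];
[:: 45; 37; 36; 44; 40];
[:: 48; 56; 57; 49; 53];
[:: 62; 54; 55; 63; 59]].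
Definition paths4_cube7 : seq (seq N) := [::
[:: 0; 1; 65; 67; 75];
[:: 14; 15; 79; 77; 69];
[:: 19; 18; 82; 80; 88];
[:: 29; 28; 92; 94; 86];
[:: 39; 38; 102; 100; 108];
[:: 41; 40; 104; 106; 98];
[:: 52; 53; 117; 119; 127];
[:: 58; 59; 123; 121; 113];
[:: 69; 68; 4; 6; 14];
[:: 75; 74; 10; 8; 0];
[:: 86; 87; 23; 21; 29];
[:: 88; 89; 25; 27; 19];
[:: 98; 99; 35; 33; 41];
[:: 108; 109; 45; 47; 39];
[:: 113; 112; 48; 50; 58];
[:: 127; 126; 62; 60; 52];
[:: 0; 2; 3; 11; 15];
[:: 14; 12; 13; 5; 1];
[:: 19; 17; 16; 24; 28];
[:: 29; 31; 30; 22; 18];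
[:: 39; 37; 36; 44; 40];
[:: 41; 43; 42; 34; 38];
[:: 52; 54; 55; 63; 59];
[:: 58; 56; 57; 49; 53];
[:: 69; 71; 70; 78; 74];
[:: 75; 73; 72; 64; 68];
[:: 86; 84; 85; 93; 89];
[:: 88; 90; 91; 83; 87];
[:: 98; 96; 97; 105; 109];
[:: 108; 110; 111; 103; 99];
[:: 113; 115; 114; 122; 126];
[:: 127; 125; 124; 116; 112];
[:: 7; 39; 35; 51; 49];
[:: 9; 41; 45; 61; 63];
[:: 20; 52; 48; 32; 34];
[:: 26; 58; 62; 46; 44];
[:: 32; 0; 4; 20; 22];
[:: 46; 14; 10; 26; 24];
[:: 51; 19; 23; 7; 5];
[:: 61; 29; 25; 9; 11];
[:: 66; 98; 102; 118; 116];
[:: 76; 108; 104; 120; 122];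
[:: 81; 113; 117; 101; 103];
[:: 95; 127; 123; 107; 105];
[:: 101; 69; 65; 81; 83];
[:: 107; 75; 79; 95; 93];
[:: 118; 86; 82; 66; 64];
[:: 120; 88; 92; 76; 78];
[:: 2; 6; 22; 86; 70];
[:: 12; 8; 24; 88; 72];
[:: 17; 21; 5; 69; 85];
[:: 31; 27; 11; 75; 91];
[:: 37; 33; 49; 113; 97];
[:: 43; 47; 63; 127; 111];
[:: 54; 50; 34; 98; 114];
[:: 56; 60; 44; 108; 124];
[:: 71; 67; 83; 19; 3];
[:: 73; 77; 93; 29; 13];
[:: 84; 80; 64; 0; 16];
[:: 90; 94; 78; 14; 30];
[:: 96; 100; 116; 52; 36];
[:: 110; 106; 122; 58; 42];
[:: 115; 119; 103; 39; 55];
[:: 125; 121; 105; 41; 57];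
[:: 6; 7; 71; 87; 119];
[:: 8; 9; 73; 89; 121];
[:: 21; 20; 84; 68; 100];
[:: 27; 26; 90; 74; 106];
[:: 33; 32; 96; 112; 80];
[:: 47; 46; 110; 126; 94];
[:: 50; 51; 115; 99; 67];
[:: 60; 61; 125; 109; 77];
[:: 67; 66; 2; 18; 50];
[:: 77; 76; 12; 28; 60];
[:: 80; 81; 17; 1; 33];
[:: 94; 95; 31; 15; 47];
[:: 100; 101; 37; 53; 21];
[:: 106; 107; 43; 59; 27];
[:: 119; 118; 54; 38; 6];
[:: 121; 120; 56; 40; 8];
[:: 3; 7; 15; 13; 77];
[:: 13; 9; 1; 3; 67];
[:: 16; 20; 28; 30; 94];
[:: 30; 26; 18; 16; 80];
[:: 36; 32; 40; 42; 106];
[:: 42; 46; 38; 36; 100];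
[:: 55; 51; 59; 57; 121];
[:: 57; 61; 53; 55; 119];
[:: 70; 66; 74; 72; 8];
[:: 72; 76; 68; 70; 6];
[:: 85; 81; 89; 91; 27];
[:: 91; 95; 87; 85; 21];
[:: 97; 101; 109; 111; 47];
[:: 111; 107; 99; 97; 33];
[:: 114; 118; 126; 124; 60];
[:: 124; 120; 112; 114; 50];
[:: 4; 12; 44; 45; 13];
[:: 10; 2; 34; 35; 3];
[:: 23; 31; 63; 62; 30];
[:: 25; 17; 49; 48; 16];
[:: 35; 43; 11; 10; 42];
[:: 45; 37; 5; 4; 36];
[:: 48; 56; 24; 25; 57];
[:: 62; 54; 22; 23; 55];
[:: 65; 73; 105; 104; 72];
[:: 79; 71; 103; 102; 70];
[:: 82; 90; 122; 123; 91];
[:: 92; 84; 116; 117; 85];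
[:: 102; 110; 78; 79; 111];
[:: 104; 96; 64; 65; 97];
[:: 117; 125; 93; 92; 124];
[:: 123; 115; 83; 82; 114]].
Definition paths8_cube4 : seq (seq N) := [::
[:: 7; 3; 11; 10; 2; 0; 1; 5; 4];
[:: 14; 10; 8; 0; 4; 6; 2; 3; 1];
[:: 4; 12; 13; 9; 11; 15; 7; 6; 14];
[:: 7; 5; 13; 15; 14; 12; 8; 9; 1]].
Definition paths8_cube6 : seq (seq N) := [::
[:: 0; 16; 18; 19; 51; 59; 58; 42; 34];
[:: 28; 12; 14; 15; 47; 39; 38; 54; 62];
[:: 39; 55; 53; 52; 20; 28; 29; 13; 5];
[:: 59; 43; 41; 40; 8; 0; 1; 17; 25];
[:: 10; 42; 40; 32; 0; 2; 34; 38; 36];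
[:: 22; 54; 52; 60; 28; 30; 62; 58; 56];
[:: 45; 13; 15; 7; 39; 37; 5; 1; 3];
[:: 49; 17; 19; 27; 59; 57; 25; 29; 31];
[:: 0; 4; 20; 22; 30; 14; 10; 26; 18];
[:: 28; 24; 8; 10; 2; 18; 22; 6; 14];
[:: 39; 35; 51; 49; 57; 41; 45; 61; 53];
[:: 59; 63; 47; 45; 37; 53; 49; 33; 41];
[:: 4; 6; 7; 5; 21; 20; 16; 24; 25];
[:: 24; 26; 27; 25; 9; 8; 12; 4; 5];
[:: 35; 33; 32; 34; 50; 51; 55; 63; 62];
[:: 63; 61; 60; 62; 46; 47; 43; 35; 34];
[:: 3; 2; 6; 38; 46; 44; 60; 56; 24];
[:: 31; 30; 26; 58; 50; 48; 32; 36; 4];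
[:: 36; 37; 33; 1; 9; 11; 27; 31; 63];
[:: 56; 57; 61; 29; 21; 23; 7; 3; 35];
[:: 10; 11; 3; 19; 23; 55; 54; 50; 18];
[:: 22; 23; 31; 15; 11; 43; 42; 46; 14];
[:: 45; 44; 36; 52; 48; 16; 17; 21; 53];
[:: 49; 48; 56; 40; 44; 12; 13; 9; 41]].
Definition paths8_cube9 : seq (seq N) := [::
[:: 13; 15; 79; 335; 351; 350; 346; 282; 283];
[:: 30; 28; 92; 348; 332; 333; 329; 265; 264];
[:: 33; 35; 99; 355; 371; 370; 374; 310; 311];
[:: 50; 48; 112; 368; 352; 353; 357; 293; 292];
[:: 75; 73; 9; 265; 281; 280; 284; 348; 349];
[:: 88; 90; 26; 282; 266; 267; 271; 335; 334];
[:: 103; 101; 37; 293; 309; 308; 304; 368; 369];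
[:: 116; 118; 54; 310; 294; 295; 291; 355; 354];
[:: 128; 130; 194; 450; 466; 467; 471; 407; 406];
[:: 147; 145; 209; 465; 449; 448; 452; 388; 389];
[:: 172; 174; 238; 494; 510; 511; 507; 443; 442];
[:: 191; 189; 253; 509; 493; 492; 488; 424; 425];
[:: 198; 196; 132; 388; 404; 405; 401; 465; 464];
[:: 213; 215; 151; 407; 391; 390; 386; 450; 451];
[:: 234; 232; 168; 424; 440; 441; 445; 509; 508];
[:: 249; 251; 187; 443; 427; 426; 430; 494; 495];
[:: 263; 261; 325; 69; 85; 84; 80; 16; 17];
[:: 276; 278; 342; 86; 70; 71; 67; 3; 2];
[:: 299; 297; 361; 105; 121; 120; 124; 60; 61];
[:: 312; 314; 378; 122; 106; 107; 111; 47; 46];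
[:: 321; 323; 259; 3; 19; 18; 22; 86; 87];
[:: 338; 336; 272; 16; 0; 1; 5; 69; 68];
[:: 365; 367; 303; 47; 63; 62; 58; 122; 123];
[:: 382; 380; 316; 60; 44; 45; 41; 105; 104];
[:: 394; 392; 456; 200; 216; 217; 221; 157; 156];
[:: 409; 411; 475; 219; 203; 202; 206; 142; 143];
[:: 422; 420; 484; 228; 244; 245; 241; 177; 176];
[:: 437; 439; 503; 247; 231; 230; 226; 162; 163];
[:: 460; 462; 398; 142; 158; 159; 155; 219; 218];
[:: 479; 477; 413; 157; 141; 140; 136; 200; 201];
[:: 480; 482; 418; 162; 178; 179; 183; 247; 246];
[:: 499; 497; 433; 177; 161; 160; 164; 228; 229];
[:: 11; 10; 74; 106; 104; 108; 109; 111; 79];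
[:: 24; 25; 89; 121; 123; 127; 126; 124; 92];
[:: 39; 38; 102; 70; 68; 64; 65; 67; 99];
[:: 52; 53; 117; 85; 87; 83; 82; 80; 112];
[:: 77; 76; 12; 44; 46; 42; 43; 41; 9];
[:: 94; 95; 31; 63; 61; 57; 56; 58; 26];
[:: 97; 96; 32; 0; 2; 6; 7; 5; 37];
[:: 114; 115; 51; 19; 17; 21; 20; 22; 54];
[:: 134; 135; 199; 231; 229; 225; 224; 226; 194];
[:: 149; 148; 212; 244; 246; 242; 243; 241; 209];
[:: 170; 171; 235; 203; 201; 205; 204; 206; 238];
[:: 185; 184; 248; 216; 218; 222; 223; 221; 253];
[:: 192; 193; 129; 161; 163; 167; 166; 164; 132];
[:: 211; 210; 146; 178; 176; 180; 181; 183; 151];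
[:: 236; 237; 173; 141; 143; 139; 138; 136; 168];
[:: 255; 254; 190; 158; 156; 152; 153; 155; 187];
[:: 257; 256; 320; 352; 354; 358; 359; 357; 325];
[:: 274; 275; 339; 371; 369; 373; 372; 374; 342];
[:: 301; 300; 364; 332; 334; 330; 331; 329; 361];
[:: 318; 319; 383; 351; 349; 345; 344; 346; 378];
[:: 327; 326; 262; 294; 292; 288; 289; 291; 259];
[:: 340; 341; 277; 309; 311; 307; 306; 304; 272];
[:: 363; 362; 298; 266; 264; 268; 269; 271; 303];
[:: 376; 377; 313; 281; 283; 287; 286; 284; 316];
[:: 396; 397; 461; 493; 495; 491; 490; 488; 456];
[:: 415; 414; 478; 510; 508; 504; 505; 507; 475];
[:: 416; 417; 481; 449; 451; 455; 454; 452; 484];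
[:: 435; 434; 498; 466; 464; 468; 469; 471; 503];
[:: 458; 459; 395; 427; 425; 429; 428; 430; 398];
[:: 473; 472; 408; 440; 442; 446; 447; 445; 413];
[:: 486; 487; 423; 391; 389; 385; 384; 386; 418];
[:: 501; 500; 436; 404; 406; 402; 403; 401; 433];
[:: 0; 4; 12; 8; 40; 41; 169; 168; 172];
[:: 19; 23; 31; 27; 59; 58; 186; 187; 191];
[:: 44; 40; 32; 36; 4; 5; 133; 132; 128];
[:: 63; 59; 51; 55; 23; 22; 150; 151; 147];
[:: 70; 66; 74; 78; 110; 111; 239; 238; 234];
[:: 85; 81; 89; 93; 125; 124; 252; 253; 249];
[:: 106; 110; 102; 98; 66; 67; 195; 194; 198];
[:: 121; 125; 117; 113; 81; 80; 208; 209; 213];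
[:: 141; 137; 129; 133; 165; 164; 36; 37; 33];
[:: 158; 154; 146; 150; 182; 183; 55; 54; 50];
[:: 161; 165; 173; 169; 137; 136; 8; 9; 13];
[:: 178; 182; 190; 186; 154; 155; 27; 26; 30];
[:: 203; 207; 199; 195; 227; 226; 98; 99; 103];
[:: 216; 220; 212; 208; 240; 241; 113; 112; 116];
[:: 231; 227; 235; 239; 207; 206; 78; 79; 75];
[:: 244; 240; 248; 252; 220; 221; 93; 92; 88];
[:: 266; 270; 262; 258; 290; 291; 419; 418; 422];
[:: 281; 285; 277; 273; 305; 304; 432; 433; 437];
[:: 294; 290; 298; 302; 270; 271; 399; 398; 394];
[:: 309; 305; 313; 317; 285; 284; 412; 413; 409];
[:: 332; 328; 320; 324; 356; 357; 485; 484; 480];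
[:: 351; 347; 339; 343; 375; 374; 502; 503; 499];
[:: 352; 356; 364; 360; 328; 329; 457; 456; 460];
[:: 371; 375; 383; 379; 347; 346; 474; 475; 479];
[:: 391; 387; 395; 399; 431; 430; 302; 303; 299];
[:: 404; 400; 408; 412; 444; 445; 317; 316; 312];
[:: 427; 431; 423; 419; 387; 386; 258; 259; 263];
[:: 440; 444; 436; 432; 400; 401; 273; 272; 276];
[:: 449; 453; 461; 457; 489; 488; 360; 361; 365];
[:: 466; 470; 478; 474; 506; 507; 379; 378; 382];
[:: 493; 489; 481; 485; 453; 452; 324; 325; 321];
[:: 510; 506; 498; 502; 470; 471; 343; 342; 338];
[:: 12; 13; 141; 133; 197; 196; 204; 200; 232];
[:: 31; 30; 158; 150; 214; 215; 223; 219; 251];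
[:: 32; 33; 161; 169; 233; 232; 224; 228; 196];
[:: 51; 50; 178; 186; 250; 251; 243; 247; 215];
[:: 74; 75; 203; 195; 131; 130; 138; 142; 174];
[:: 89; 88; 216; 208; 144; 145; 153; 157; 189];
[:: 102; 103; 231; 239; 175; 174; 166; 162; 130];
[:: 117; 116; 244; 252; 188; 189; 181; 177; 145];
[:: 129; 128; 0; 8; 72; 73; 65; 69; 101];
[:: 146; 147; 19; 27; 91; 90; 82; 86; 118];
[:: 173; 172; 44; 36; 100; 101; 109; 105; 73];
[:: 190; 191; 63; 55; 119; 118; 126; 122; 90];
[:: 199; 198; 70; 78; 14; 15; 7; 3; 35];
[:: 212; 213; 85; 93; 29; 28; 20; 16; 48];
[:: 235; 234; 106; 98; 34; 35; 43; 47; 15];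
[:: 248; 249; 121; 113; 49; 48; 56; 60; 28];
[:: 262; 263; 391; 399; 463; 462; 454; 450; 482];
[:: 277; 276; 404; 412; 476; 477; 469; 465; 497];
[:: 298; 299; 427; 419; 483; 482; 490; 494; 462];
[:: 313; 312; 440; 432; 496; 497; 505; 509; 477];
[:: 320; 321; 449; 457; 393; 392; 384; 388; 420];
[:: 339; 338; 466; 474; 410; 411; 403; 407; 439];
[:: 364; 365; 493; 485; 421; 420; 428; 424; 392];
[:: 383; 382; 510; 502; 438; 439; 447; 443; 411];
[:: 395; 394; 266; 258; 322; 323; 331; 335; 367];
[:: 408; 409; 281; 273; 337; 336; 344; 348; 380];
[:: 423; 422; 294; 302; 366; 367; 359; 355; 323];
[:: 436; 437; 309; 317; 381; 380; 372; 368; 336];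
[:: 461; 460; 332; 324; 260; 261; 269; 265; 297];
[:: 478; 479; 351; 343; 279; 278; 286; 282; 314];
[:: 481; 480; 352; 360; 296; 297; 289; 293; 261];
[:: 498; 499; 371; 379; 315; 314; 306; 310; 278];
[:: 7; 23; 151; 135; 131; 163; 171; 427; 491];
[:: 20; 4; 132; 148; 144; 176; 184; 440; 504];
[:: 43; 59; 187; 171; 175; 143; 135; 391; 455];
[:: 56; 40; 168; 184; 188; 156; 148; 404; 468];
[:: 65; 81; 209; 193; 197; 229; 237; 493; 429];
[:: 82; 66; 194; 210; 214; 246; 254; 510; 446];
[:: 109; 125; 253; 237; 233; 201; 193; 449; 385];
[:: 126; 110; 238; 254; 250; 218; 210; 466; 402];
[:: 138; 154; 26; 10; 14; 46; 38; 294; 358];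
[:: 153; 137; 9; 25; 29; 61; 53; 309; 373];
[:: 166; 182; 54; 38; 34; 2; 10; 266; 330];
[:: 181; 165; 37; 53; 49; 17; 25; 281; 345];
[:: 204; 220; 92; 76; 72; 104; 96; 352; 288];
[:: 223; 207; 79; 95; 91; 123; 115; 371; 307];
[:: 224; 240; 112; 96; 100; 68; 76; 332; 268];
[:: 243; 227; 99; 115; 119; 87; 95; 351; 287];
[:: 269; 285; 413; 397; 393; 425; 417; 161; 225];
[:: 286; 270; 398; 414; 410; 442; 434; 178; 242];
[:: 289; 305; 433; 417; 421; 389; 397; 141; 205];
[:: 306; 290; 418; 434; 438; 406; 414; 158; 222];
[:: 331; 347; 475; 459; 463; 495; 487; 231; 167];
[:: 344; 328; 456; 472; 476; 508; 500; 244; 180];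
[:: 359; 375; 503; 487; 483; 451; 459; 203; 139];
[:: 372; 356; 484; 500; 496; 464; 472; 216; 152];
[:: 384; 400; 272; 256; 260; 292; 300; 44; 108];
[:: 403; 387; 259; 275; 279; 311; 319; 63; 127];
[:: 428; 444; 316; 300; 296; 264; 256; 0; 64];
[:: 447; 431; 303; 319; 315; 283; 275; 19; 83];
[:: 454; 470; 342; 326; 322; 354; 362; 106; 42];
[:: 469; 453; 325; 341; 337; 369; 377; 121; 57];
[:: 490; 506; 378; 362; 366; 334; 326; 70; 6];
[:: 505; 489; 361; 377; 381; 349; 341; 85; 21];
[:: 8; 264; 328; 330; 362; 360; 376; 378; 370];
[:: 27; 283; 347; 345; 377; 379; 363; 361; 353];
[:: 36; 292; 356; 358; 326; 324; 340; 342; 350];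
[:: 55; 311; 375; 373; 341; 343; 327; 325; 333];
[:: 78; 334; 270; 268; 300; 302; 318; 316; 308];
[:: 93; 349; 285; 287; 319; 317; 301; 303; 295];
[:: 98; 354; 290; 288; 256; 258; 274; 272; 280];
[:: 113; 369; 305; 307; 275; 273; 257; 259; 267];
[:: 133; 389; 453; 455; 487; 485; 501; 503; 511];
[:: 150; 406; 470; 468; 500; 502; 486; 484; 492];
[:: 169; 425; 489; 491; 459; 457; 473; 475; 467];
[:: 186; 442; 506; 504; 472; 474; 458; 456; 448];
[:: 195; 451; 387; 385; 417; 419; 435; 433; 441];
[:: 208; 464; 400; 402; 434; 432; 416; 418; 426];
[:: 239; 495; 431; 429; 397; 399; 415; 413; 405];
[:: 252; 508; 444; 446; 414; 412; 396; 398; 390];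
[:: 258; 2; 66; 64; 96; 98; 114; 112; 120];
[:: 273; 17; 81; 83; 115; 113; 97; 99; 107];
[:: 302; 46; 110; 108; 76; 78; 94; 92; 84];
[:: 317; 61; 125; 127; 95; 93; 77; 79; 71];
[:: 324; 68; 4; 6; 38; 36; 52; 54; 62];
[:: 343; 87; 23; 21; 53; 55; 39; 37; 45];
[:: 360; 104; 40; 42; 10; 8; 24; 26; 18];
[:: 379; 123; 59; 57; 25; 27; 11; 9; 1];
[:: 399; 143; 207; 205; 237; 239; 255; 253; 245];
[:: 412; 156; 220; 222; 254; 252; 236; 238; 230];
[:: 419; 163; 227; 225; 193; 195; 211; 209; 217];
[:: 432; 176; 240; 242; 210; 208; 192; 194; 202];
[:: 457; 201; 137; 139; 171; 169; 185; 187; 179];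
[:: 474; 218; 154; 152; 184; 186; 170; 168; 160];
[:: 485; 229; 165; 167; 135; 133; 149; 151; 159];
[:: 502; 246; 182; 180; 148; 150; 134; 132; 140];
[:: 13; 77; 73; 329; 321; 337; 339; 467; 465];
[:: 30; 94; 90; 346; 338; 322; 320; 448; 450];
[:: 33; 97; 101; 357; 365; 381; 383; 511; 509];
[:: 50; 114; 118; 374; 382; 366; 364; 492; 494];
[:: 75; 11; 15; 271; 263; 279; 277; 405; 407];
[:: 88; 24; 28; 284; 276; 260; 262; 390; 388];
[:: 103; 39; 35; 291; 299; 315; 313; 441; 443];
[:: 116; 52; 48; 304; 312; 296; 298; 426; 424];
[:: 128; 192; 196; 452; 460; 476; 478; 350; 348];
[:: 147; 211; 215; 471; 479; 463; 461; 333; 335];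
[:: 172; 236; 232; 488; 480; 496; 498; 370; 368];
[:: 191; 255; 251; 507; 499; 483; 481; 353; 355];
[:: 198; 134; 130; 386; 394; 410; 408; 280; 282];
[:: 213; 149; 145; 401; 409; 393; 395; 267; 265];
[:: 234; 170; 174; 430; 422; 438; 436; 308; 310];
[:: 249; 185; 189; 445; 437; 421; 423; 295; 293];
[:: 263; 327; 323; 67; 75; 91; 89; 217; 219];
[:: 276; 340; 336; 80; 88; 72; 74; 202; 200];
[:: 299; 363; 367; 111; 103; 119; 117; 245; 247];
[:: 312; 376; 380; 124; 116; 100; 102; 230; 228];
[:: 321; 257; 261; 5; 13; 29; 31; 159; 157];
[:: 338; 274; 278; 22; 30; 14; 12; 140; 142];
[:: 365; 301; 297; 41; 33; 49; 51; 179; 177];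
[:: 382; 318; 314; 58; 50; 34; 32; 160; 162];
[:: 394; 458; 462; 206; 198; 214; 212; 84; 86];
[:: 409; 473; 477; 221; 213; 197; 199; 71; 69];
[:: 422; 486; 482; 226; 234; 250; 248; 120; 122];
[:: 437; 501; 497; 241; 249; 233; 235; 107; 105];
[:: 460; 396; 392; 136; 128; 144; 146; 18; 16];
[:: 479; 415; 411; 155; 147; 131; 129; 1; 3];
[:: 480; 416; 420; 164; 172; 188; 190; 62; 60];
[:: 499; 435; 439; 183; 191; 175; 173; 45; 47];
[:: 14; 142; 134; 166; 230; 486; 358; 366; 110];
[:: 29; 157; 149; 181; 245; 501; 373; 381; 125];
[:: 34; 162; 170; 138; 202; 458; 330; 322; 66];
[:: 49; 177; 185; 153; 217; 473; 345; 337; 81];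
[:: 72; 200; 192; 224; 160; 416; 288; 296; 40];
[:: 91; 219; 211; 243; 179; 435; 307; 315; 59];
[:: 100; 228; 236; 204; 140; 396; 268; 260; 4];
[:: 119; 247; 255; 223; 159; 415; 287; 279; 23];
[:: 131; 3; 11; 43; 107; 363; 491; 483; 227];
[:: 144; 16; 24; 56; 120; 376; 504; 496; 240];
[:: 175; 47; 39; 7; 71; 327; 455; 463; 207];
[:: 188; 60; 52; 20; 84; 340; 468; 476; 220];
[:: 197; 69; 77; 109; 45; 301; 429; 421; 165];
[:: 214; 86; 94; 126; 62; 318; 446; 438; 182];
[:: 233; 105; 97; 65; 1; 257; 385; 393; 137];
[:: 250; 122; 114; 82; 18; 274; 402; 410; 154];
[:: 260; 388; 396; 428; 492; 236; 108; 100; 356];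
[:: 279; 407; 415; 447; 511; 255; 127; 119; 375];
[:: 296; 424; 416; 384; 448; 192; 64; 72; 328];
[:: 315; 443; 435; 403; 467; 211; 83; 91; 347];
[:: 322; 450; 458; 490; 426; 170; 42; 34; 290];
[:: 337; 465; 473; 505; 441; 185; 57; 49; 305];
[:: 366; 494; 486; 454; 390; 134; 6; 14; 270];
[:: 381; 509; 501; 469; 405; 149; 21; 29; 285];
[:: 393; 265; 257; 289; 353; 97; 225; 233; 489];
[:: 410; 282; 274; 306; 370; 114; 242; 250; 506];
[:: 421; 293; 301; 269; 333; 77; 205; 197; 453];
[:: 438; 310; 318; 286; 350; 94; 222; 214; 470];
[:: 463; 335; 327; 359; 295; 39; 167; 175; 431];
[:: 476; 348; 340; 372; 308; 52; 180; 188; 444];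
[:: 483; 355; 363; 331; 267; 11; 139; 131; 387];
[:: 496; 368; 376; 344; 280; 24; 152; 144; 400];
[:: 10; 138; 394; 426; 442; 314; 298; 42; 58];
[:: 25; 153; 409; 441; 425; 297; 313; 57; 41];
[:: 38; 166; 422; 390; 406; 278; 262; 6; 22];
[:: 53; 181; 437; 405; 389; 261; 277; 21; 5];
[:: 76; 204; 460; 492; 508; 380; 364; 108; 124];
[:: 95; 223; 479; 511; 495; 367; 383; 127; 111];
[:: 96; 224; 480; 448; 464; 336; 320; 64; 80];
[:: 115; 243; 499; 467; 451; 323; 339; 83; 67];
[:: 135; 7; 263; 295; 311; 439; 423; 167; 183];
[:: 148; 20; 276; 308; 292; 420; 436; 180; 164];
[:: 171; 43; 299; 267; 283; 411; 395; 139; 155];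
[:: 184; 56; 312; 280; 264; 392; 408; 152; 136];
[:: 193; 65; 321; 353; 369; 497; 481; 225; 241];
[:: 210; 82; 338; 370; 354; 482; 498; 242; 226];
[:: 237; 109; 365; 333; 349; 477; 461; 205; 221];
[:: 254; 126; 382; 350; 334; 462; 478; 222; 206];
[:: 256; 384; 128; 160; 176; 48; 32; 288; 304];
[:: 275; 403; 147; 179; 163; 35; 51; 307; 291];
[:: 300; 428; 172; 140; 156; 28; 12; 268; 284];
[:: 319; 447; 191; 159; 143; 15; 31; 287; 271];
[:: 326; 454; 198; 230; 246; 118; 102; 358; 374];
[:: 341; 469; 213; 245; 229; 101; 117; 373; 357];
[:: 362; 490; 234; 202; 218; 90; 74; 330; 346];
[:: 377; 505; 249; 217; 201; 73; 89; 345; 329];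
[:: 397; 269; 13; 45; 61; 189; 173; 429; 445];
[:: 414; 286; 30; 62; 46; 174; 190; 446; 430];
[:: 417; 289; 33; 1; 17; 145; 129; 385; 401];
[:: 434; 306; 50; 18; 2; 130; 146; 402; 386];
[:: 459; 331; 75; 107; 123; 251; 235; 491; 507];
[:: 472; 344; 88; 120; 104; 232; 248; 504; 488];
[:: 487; 359; 103; 71; 87; 215; 199; 455; 471];
[:: 500; 372; 116; 84; 68; 196; 212; 468; 452]].
Definition paths8_cube11 : seq (seq N) := [::
[:: 13; 525; 527; 519; 535; 599; 598; 594; 1618];
[:: 17; 529; 531; 539; 523; 587; 586; 590; 1614];
[:: 43; 555; 553; 545; 561; 625; 624; 628; 1652];
[:: 55; 567; 565; 573; 557; 621; 620; 616; 1640];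
[:: 72; 584; 586; 578; 594; 530; 531; 535; 1559];
[:: 84; 596; 598; 606; 590; 526; 527; 523; 1547];
[:: 110; 622; 620; 612; 628; 564; 565; 561; 1585];
[:: 114; 626; 624; 632; 616; 552; 553; 557; 1581];
[:: 134; 646; 644; 652; 668; 732; 733; 729; 1753];
[:: 154; 666; 664; 656; 640; 704; 705; 709; 1733];
[:: 160; 672; 674; 682; 698; 762; 763; 767; 1791];
[:: 188; 700; 702; 694; 678; 742; 743; 739; 1763];
[:: 195; 707; 705; 713; 729; 665; 664; 668; 1692];
[:: 223; 735; 733; 725; 709; 645; 644; 640; 1664];
[:: 229; 741; 743; 751; 767; 703; 702; 698; 1722];
[:: 249; 761; 763; 755; 739; 675; 674; 678; 1702];
[:: 266; 778; 776; 768; 784; 848; 849; 853; 1877];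
[:: 278; 790; 788; 796; 780; 844; 845; 841; 1865];
[:: 300; 812; 814; 806; 822; 886; 887; 883; 1907];
[:: 304; 816; 818; 826; 810; 874; 875; 879; 1903];
[:: 335; 847; 845; 837; 853; 789; 788; 784; 1808];
[:: 339; 851; 849; 857; 841; 777; 776; 780; 1804];
[:: 361; 873; 875; 867; 883; 819; 818; 822; 1846];
[:: 373; 885; 887; 895; 879; 815; 814; 810; 1834];
[:: 385; 897; 899; 907; 923; 987; 986; 990; 2014];
[:: 413; 925; 927; 919; 903; 967; 966; 962; 1986];
[:: 423; 935; 933; 941; 957; 1021; 1020; 1016; 2040];
[:: 443; 955; 953; 945; 929; 993; 992; 996; 2020];
[:: 452; 964; 966; 974; 990; 926; 927; 923; 1947];
[:: 472; 984; 986; 978; 962; 898; 899; 903; 1927];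
[:: 482; 994; 992; 1000; 1016; 952; 953; 957; 1981];
[:: 510; 1022; 1020; 1012; 996; 932; 933; 929; 1953];
[:: 515; 3; 1; 9; 25; 89; 88; 92; 1116];
[:: 543; 31; 29; 21; 5; 69; 68; 64; 1088];
[:: 549; 37; 39; 47; 63; 127; 126; 122; 1146];
[:: 569; 57; 59; 51; 35; 99; 98; 102; 1126];
[:: 582; 70; 68; 76; 92; 28; 29; 25; 1049];
[:: 602; 90; 88; 80; 64; 0; 1; 5; 1029];
[:: 608; 96; 98; 106; 122; 58; 59; 63; 1087];
[:: 636; 124; 126; 118; 102; 38; 39; 35; 1059];
[:: 648; 136; 138; 130; 146; 210; 211; 215; 1239];
[:: 660; 148; 150; 158; 142; 206; 207; 203; 1227];
[:: 686; 174; 172; 164; 180; 244; 245; 241; 1265];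
[:: 690; 178; 176; 184; 168; 232; 233; 237; 1261];
[:: 717; 205; 207; 199; 215; 151; 150; 146; 1170];
[:: 721; 209; 211; 219; 203; 139; 138; 142; 1166];
[:: 747; 235; 233; 225; 241; 177; 176; 180; 1204];
[:: 759; 247; 245; 253; 237; 173; 172; 168; 1192];
[:: 772; 260; 262; 270; 286; 350; 351; 347; 1371];
[:: 792; 280; 282; 274; 258; 322; 323; 327; 1351];
[:: 802; 290; 288; 296; 312; 376; 377; 381; 1405];
[:: 830; 318; 316; 308; 292; 356; 357; 353; 1377];
[:: 833; 321; 323; 331; 347; 283; 282; 286; 1310];
[:: 861; 349; 351; 343; 327; 263; 262; 258; 1282];
[:: 871; 359; 357; 365; 381; 317; 316; 312; 1336];
[:: 891; 379; 377; 369; 353; 289; 288; 292; 1316];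
[:: 911; 399; 397; 389; 405; 469; 468; 464; 1488];
[:: 915; 403; 401; 409; 393; 457; 456; 460; 1484];
[:: 937; 425; 427; 419; 435; 499; 498; 502; 1526];
[:: 949; 437; 439; 447; 431; 495; 494; 490; 1514];
[:: 970; 458; 456; 448; 464; 400; 401; 405; 1429];
[:: 982; 470; 468; 476; 460; 396; 397; 393; 1417];
[:: 1004; 492; 494; 486; 502; 438; 439; 435; 1459];
[:: 1008; 496; 498; 506; 490; 426; 427; 431; 1455];
[:: 1038; 1550; 1548; 1540; 1556; 1620; 1621; 1617; 593];
[:: 1042; 1554; 1552; 1560; 1544; 1608; 1609; 1613; 589];
[:: 1064; 1576; 1578; 1570; 1586; 1650; 1651; 1655; 631];
[:: 1076; 1588; 1590; 1598; 1582; 1646; 1647; 1643; 619];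
[:: 1099; 1611; 1609; 1601; 1617; 1553; 1552; 1556; 532];
[:: 1111; 1623; 1621; 1629; 1613; 1549; 1548; 1544; 520];
[:: 1133; 1645; 1647; 1639; 1655; 1591; 1590; 1586; 562];
[:: 1137; 1649; 1651; 1659; 1643; 1579; 1578; 1582; 558];
[:: 1157; 1669; 1671; 1679; 1695; 1759; 1758; 1754; 730];
[:: 1177; 1689; 1691; 1683; 1667; 1731; 1730; 1734; 710];
[:: 1187; 1699; 1697; 1705; 1721; 1785; 1784; 1788; 764];
[:: 1215; 1727; 1725; 1717; 1701; 1765; 1764; 1760; 736];
[:: 1216; 1728; 1730; 1738; 1754; 1690; 1691; 1695; 671];
[:: 1244; 1756; 1758; 1750; 1734; 1670; 1671; 1667; 643];
[:: 1254; 1766; 1764; 1772; 1788; 1724; 1725; 1721; 697];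
[:: 1274; 1786; 1784; 1776; 1760; 1696; 1697; 1701; 677];
[:: 1289; 1801; 1803; 1795; 1811; 1875; 1874; 1878; 854];
[:: 1301; 1813; 1815; 1823; 1807; 1871; 1870; 1866; 842];
[:: 1327; 1839; 1837; 1829; 1845; 1909; 1908; 1904; 880];
[:: 1331; 1843; 1841; 1849; 1833; 1897; 1896; 1900; 876];
[:: 1356; 1868; 1870; 1862; 1878; 1814; 1815; 1811; 787];
[:: 1360; 1872; 1874; 1882; 1866; 1802; 1803; 1807; 783];
[:: 1386; 1898; 1896; 1888; 1904; 1840; 1841; 1845; 821];
[:: 1398; 1910; 1908; 1916; 1900; 1836; 1837; 1833; 809];
[:: 1410; 1922; 1920; 1928; 1944; 2008; 2009; 2013; 989];
[:: 1438; 1950; 1948; 1940; 1924; 1988; 1989; 1985; 961];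
[:: 1444; 1956; 1958; 1966; 1982; 2046; 2047; 2043; 1019];
[:: 1464; 1976; 1978; 1970; 1954; 2018; 2019; 2023; 999];
[:: 1479; 1991; 1989; 1997; 2013; 1949; 1948; 1944; 920];
[:: 1499; 2011; 2009; 2001; 1985; 1921; 1920; 1924; 900];
[:: 1505; 2017; 2019; 2027; 2043; 1979; 1978; 1982; 958];
[:: 1533; 2045; 2047; 2039; 2023; 1959; 1958; 1954; 930];
[:: 1536; 1024; 1026; 1034; 1050; 1114; 1115; 1119; 95];
[:: 1564; 1052; 1054; 1046; 1030; 1094; 1095; 1091; 67];
[:: 1574; 1062; 1060; 1068; 1084; 1148; 1149; 1145; 121];
[:: 1594; 1082; 1080; 1072; 1056; 1120; 1121; 1125; 101];
[:: 1605; 1093; 1095; 1103; 1119; 1055; 1054; 1050; 26];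
[:: 1625; 1113; 1115; 1107; 1091; 1027; 1026; 1030; 6];
[:: 1635; 1123; 1121; 1129; 1145; 1081; 1080; 1084; 60];
[:: 1663; 1151; 1149; 1141; 1125; 1061; 1060; 1056; 32];
[:: 1675; 1163; 1161; 1153; 1169; 1233; 1232; 1236; 212];
[:: 1687; 1175; 1173; 1181; 1165; 1229; 1228; 1224; 200];
[:: 1709; 1197; 1199; 1191; 1207; 1271; 1270; 1266; 242];
[:: 1713; 1201; 1203; 1211; 1195; 1259; 1258; 1262; 238];
[:: 1742; 1230; 1228; 1220; 1236; 1172; 1173; 1169; 145];
[:: 1746; 1234; 1232; 1240; 1224; 1160; 1161; 1165; 141];
[:: 1768; 1256; 1258; 1250; 1266; 1202; 1203; 1207; 183];
[:: 1780; 1268; 1270; 1278; 1262; 1198; 1199; 1195; 171];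
[:: 1799; 1287; 1285; 1293; 1309; 1373; 1372; 1368; 344];
[:: 1819; 1307; 1305; 1297; 1281; 1345; 1344; 1348; 324];
[:: 1825; 1313; 1315; 1323; 1339; 1403; 1402; 1406; 382];
[:: 1853; 1341; 1343; 1335; 1319; 1383; 1382; 1378; 354];
[:: 1858; 1346; 1344; 1352; 1368; 1304; 1305; 1309; 285];
[:: 1886; 1374; 1372; 1364; 1348; 1284; 1285; 1281; 257];
[:: 1892; 1380; 1382; 1390; 1406; 1342; 1343; 1339; 315];
[:: 1912; 1400; 1402; 1394; 1378; 1314; 1315; 1319; 295];
[:: 1932; 1420; 1422; 1414; 1430; 1494; 1495; 1491; 467];
[:: 1936; 1424; 1426; 1434; 1418; 1482; 1483; 1487; 463];
[:: 1962; 1450; 1448; 1440; 1456; 1520; 1521; 1525; 501];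
[:: 1974; 1462; 1460; 1468; 1452; 1516; 1517; 1513; 489];
[:: 1993; 1481; 1483; 1475; 1491; 1427; 1426; 1430; 406];
[:: 2005; 1493; 1495; 1503; 1487; 1423; 1422; 1418; 394];
[:: 2031; 1519; 1517; 1509; 1525; 1461; 1460; 1456; 432];
[:: 2035; 1523; 1521; 1529; 1513; 1449; 1448; 1452; 428];
[:: 15; 14; 526; 524; 780; 908; 972; 974; 462];
[:: 19; 18; 530; 528; 784; 912; 976; 978; 466];
[:: 41; 40; 552; 554; 810; 938; 1002; 1000; 488];
[:: 53; 52; 564; 566; 822; 950; 1014; 1012; 500];
[:: 74; 75; 587; 585; 841; 969; 905; 907; 395];
[:: 86; 87; 599; 597; 853; 981; 917; 919; 407];
[:: 108; 109; 621; 623; 879; 1007; 943; 941; 429];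
[:: 112; 113; 625; 627; 883; 1011; 947; 945; 433];
[:: 132; 133; 645; 647; 903; 775; 839; 837; 325];
[:: 152; 153; 665; 667; 923; 795; 859; 857; 345];
[:: 162; 163; 675; 673; 929; 801; 865; 867; 355];
[:: 190; 191; 703; 701; 957; 829; 893; 895; 383];
[:: 193; 192; 704; 706; 962; 834; 770; 768; 256];
[:: 221; 220; 732; 734; 990; 862; 798; 796; 284];
[:: 231; 230; 742; 740; 996; 868; 804; 806; 294];
[:: 251; 250; 762; 760; 1016; 888; 824; 826; 314];
[:: 264; 265; 777; 779; 523; 651; 715; 713; 201];
[:: 276; 277; 789; 791; 535; 663; 727; 725; 213];
[:: 302; 303; 815; 813; 557; 685; 749; 751; 239];
[:: 306; 307; 819; 817; 561; 689; 753; 755; 243];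
[:: 333; 332; 844; 846; 590; 718; 654; 652; 140];
[:: 337; 336; 848; 850; 594; 722; 658; 656; 144];
[:: 363; 362; 874; 872; 616; 744; 680; 682; 170];
[:: 375; 374; 886; 884; 628; 756; 692; 694; 182];
[:: 387; 386; 898; 896; 640; 512; 576; 578; 66];
[:: 415; 414; 926; 924; 668; 540; 604; 606; 94];
[:: 421; 420; 932; 934; 678; 550; 614; 612; 100];
[:: 441; 440; 952; 954; 698; 570; 634; 632; 120];
[:: 454; 455; 967; 965; 709; 581; 517; 519; 7];
[:: 474; 475; 987; 985; 729; 601; 537; 539; 27];
[:: 480; 481; 993; 995; 739; 611; 547; 545; 33];
[:: 508; 509; 1021; 1023; 767; 639; 575; 573; 61];
[:: 513; 512; 0; 2; 258; 386; 450; 448; 960];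
[:: 541; 540; 28; 30; 286; 414; 478; 476; 988];
[:: 551; 550; 38; 36; 292; 420; 484; 486; 998];
[:: 571; 570; 58; 56; 312; 440; 504; 506; 1018];
[:: 580; 581; 69; 71; 327; 455; 391; 389; 901];
[:: 600; 601; 89; 91; 347; 475; 411; 409; 921];
[:: 610; 611; 99; 97; 353; 481; 417; 419; 931];
[:: 638; 639; 127; 125; 381; 509; 445; 447; 959];
[:: 650; 651; 139; 137; 393; 265; 329; 331; 843];
[:: 662; 663; 151; 149; 405; 277; 341; 343; 855];
[:: 684; 685; 173; 175; 431; 303; 367; 365; 877];
[:: 688; 689; 177; 179; 435; 307; 371; 369; 881];
[:: 719; 718; 206; 204; 460; 332; 268; 270; 782];
[:: 723; 722; 210; 208; 464; 336; 272; 274; 786];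
[:: 745; 744; 232; 234; 490; 362; 298; 296; 808];
[:: 757; 756; 244; 246; 502; 374; 310; 308; 820];
[:: 774; 775; 263; 261; 5; 133; 197; 199; 711];
[:: 794; 795; 283; 281; 25; 153; 217; 219; 731];
[:: 800; 801; 289; 291; 35; 163; 227; 225; 737];
[:: 828; 829; 317; 319; 63; 191; 255; 253; 765];
[:: 835; 834; 322; 320; 64; 192; 128; 130; 642];
[:: 863; 862; 350; 348; 92; 220; 156; 158; 670];
[:: 869; 868; 356; 358; 102; 230; 166; 164; 676];
[:: 889; 888; 376; 378; 122; 250; 186; 184; 696];
[:: 909; 908; 396; 398; 142; 14; 78; 76; 588];
[:: 913; 912; 400; 402; 146; 18; 82; 80; 592];
[:: 939; 938; 426; 424; 168; 40; 104; 106; 618];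
[:: 951; 950; 438; 436; 180; 52; 116; 118; 630];
[:: 968; 969; 457; 459; 203; 75; 11; 9; 521];
[:: 980; 981; 469; 471; 215; 87; 23; 21; 533];
[:: 1006; 1007; 495; 493; 237; 109; 45; 47; 559];
[:: 1010; 1011; 499; 497; 241; 113; 49; 51; 563];
[:: 1036; 1037; 1549; 1551; 1807; 1935; 1999; 1997; 1485];
[:: 1040; 1041; 1553; 1555; 1811; 1939; 2003; 2001; 1489];
[:: 1066; 1067; 1579; 1577; 1833; 1961; 2025; 2027; 1515];
[:: 1078; 1079; 1591; 1589; 1845; 1973; 2037; 2039; 1527];
[:: 1097; 1096; 1608; 1610; 1866; 1994; 1930; 1928; 1416];
[:: 1109; 1108; 1620; 1622; 1878; 2006; 1942; 1940; 1428];
[:: 1135; 1134; 1646; 1644; 1900; 2028; 1964; 1966; 1454];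
[:: 1139; 1138; 1650; 1648; 1904; 2032; 1968; 1970; 1458];
[:: 1159; 1158; 1670; 1668; 1924; 1796; 1860; 1862; 1350];
[:: 1179; 1178; 1690; 1688; 1944; 1816; 1880; 1882; 1370];
[:: 1185; 1184; 1696; 1698; 1954; 1826; 1890; 1888; 1376];
[:: 1213; 1212; 1724; 1726; 1982; 1854; 1918; 1916; 1404];
[:: 1218; 1219; 1731; 1729; 1985; 1857; 1793; 1795; 1283];
[:: 1246; 1247; 1759; 1757; 2013; 1885; 1821; 1823; 1311];
[:: 1252; 1253; 1765; 1767; 2023; 1895; 1831; 1829; 1317];
[:: 1272; 1273; 1785; 1787; 2043; 1915; 1851; 1849; 1337];
[:: 1291; 1290; 1802; 1800; 1544; 1672; 1736; 1738; 1226];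
[:: 1303; 1302; 1814; 1812; 1556; 1684; 1748; 1750; 1238];
[:: 1325; 1324; 1836; 1838; 1582; 1710; 1774; 1772; 1260];
[:: 1329; 1328; 1840; 1842; 1586; 1714; 1778; 1776; 1264];
[:: 1358; 1359; 1871; 1869; 1613; 1741; 1677; 1679; 1167];
[:: 1362; 1363; 1875; 1873; 1617; 1745; 1681; 1683; 1171];
[:: 1384; 1385; 1897; 1899; 1643; 1771; 1707; 1705; 1193];
[:: 1396; 1397; 1909; 1911; 1655; 1783; 1719; 1717; 1205];
[:: 1408; 1409; 1921; 1923; 1667; 1539; 1603; 1601; 1089];
[:: 1436; 1437; 1949; 1951; 1695; 1567; 1631; 1629; 1117];
[:: 1446; 1447; 1959; 1957; 1701; 1573; 1637; 1639; 1127];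
[:: 1466; 1467; 1979; 1977; 1721; 1593; 1657; 1659; 1147];
[:: 1477; 1476; 1988; 1990; 1734; 1606; 1542; 1540; 1028];
[:: 1497; 1496; 2008; 2010; 1754; 1626; 1562; 1560; 1048];
[:: 1507; 1506; 2018; 2016; 1760; 1632; 1568; 1570; 1058];
[:: 1535; 1534; 2046; 2044; 1788; 1660; 1596; 1598; 1086];
[:: 1538; 1539; 1027; 1025; 1281; 1409; 1473; 1475; 1987];
[:: 1566; 1567; 1055; 1053; 1309; 1437; 1501; 1503; 2015];
[:: 1572; 1573; 1061; 1063; 1319; 1447; 1511; 1509; 2021];
[:: 1592; 1593; 1081; 1083; 1339; 1467; 1531; 1529; 2041];
[:: 1607; 1606; 1094; 1092; 1348; 1476; 1412; 1414; 1926];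
[:: 1627; 1626; 1114; 1112; 1368; 1496; 1432; 1434; 1946];
[:: 1633; 1632; 1120; 1122; 1378; 1506; 1442; 1440; 1952];
[:: 1661; 1660; 1148; 1150; 1406; 1534; 1470; 1468; 1980];
[:: 1673; 1672; 1160; 1162; 1418; 1290; 1354; 1352; 1864];
[:: 1685; 1684; 1172; 1174; 1430; 1302; 1366; 1364; 1876];
[:: 1711; 1710; 1198; 1196; 1452; 1324; 1388; 1390; 1902];
[:: 1715; 1714; 1202; 1200; 1456; 1328; 1392; 1394; 1906];
[:: 1740; 1741; 1229; 1231; 1487; 1359; 1295; 1293; 1805];
[:: 1744; 1745; 1233; 1235; 1491; 1363; 1299; 1297; 1809];
[:: 1770; 1771; 1259; 1257; 1513; 1385; 1321; 1323; 1835];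
[:: 1782; 1783; 1271; 1269; 1525; 1397; 1333; 1335; 1847];
[:: 1797; 1796; 1284; 1286; 1030; 1158; 1222; 1220; 1732];
[:: 1817; 1816; 1304; 1306; 1050; 1178; 1242; 1240; 1752];
[:: 1827; 1826; 1314; 1312; 1056; 1184; 1248; 1250; 1762];
[:: 1855; 1854; 1342; 1340; 1084; 1212; 1276; 1278; 1790];
[:: 1856; 1857; 1345; 1347; 1091; 1219; 1155; 1153; 1665];
[:: 1884; 1885; 1373; 1375; 1119; 1247; 1183; 1181; 1693];
[:: 1894; 1895; 1383; 1381; 1125; 1253; 1189; 1191; 1703];
[:: 1914; 1915; 1403; 1401; 1145; 1273; 1209; 1211; 1723];
[:: 1934; 1935; 1423; 1421; 1165; 1037; 1101; 1103; 1615];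
[:: 1938; 1939; 1427; 1425; 1169; 1041; 1105; 1107; 1619];
[:: 1960; 1961; 1449; 1451; 1195; 1067; 1131; 1129; 1641];
[:: 1972; 1973; 1461; 1463; 1207; 1079; 1143; 1141; 1653];
[:: 1995; 1994; 1482; 1480; 1224; 1096; 1032; 1034; 1546];
[:: 2007; 2006; 1494; 1492; 1236; 1108; 1044; 1046; 1558];
[:: 2029; 2028; 1516; 1518; 1262; 1134; 1070; 1068; 1580];
[:: 2033; 2032; 1520; 1522; 1266; 1138; 1074; 1072; 1584];
[:: 10; 26; 58; 62; 190; 158; 414; 406; 470];
[:: 22; 6; 38; 34; 162; 130; 386; 394; 458];
[:: 44; 60; 28; 24; 152; 184; 440; 432; 496];
[:: 48; 32; 0; 4; 132; 164; 420; 428; 492];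
[:: 79; 95; 127; 123; 251; 219; 475; 467; 403];
[:: 83; 67; 99; 103; 231; 199; 455; 463; 399];
[:: 105; 121; 89; 93; 221; 253; 509; 501; 437];
[:: 117; 101; 69; 65; 193; 225; 481; 489; 425];
[:: 129; 145; 177; 181; 53; 21; 277; 285; 349];
[:: 157; 141; 173; 169; 41; 9; 265; 257; 321];
[:: 167; 183; 151; 147; 19; 51; 307; 315; 379];
[:: 187; 171; 139; 143; 15; 47; 303; 295; 359];
[:: 196; 212; 244; 240; 112; 80; 336; 344; 280];
[:: 216; 200; 232; 236; 108; 76; 332; 324; 260];
[:: 226; 242; 210; 214; 86; 118; 374; 382; 318];
[:: 254; 238; 206; 202; 74; 106; 362; 354; 290];
[:: 269; 285; 317; 313; 441; 409; 153; 145; 209];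
[:: 273; 257; 289; 293; 421; 389; 133; 141; 205];
[:: 299; 315; 283; 287; 415; 447; 191; 183; 247];
[:: 311; 295; 263; 259; 387; 419; 163; 171; 235];
[:: 328; 344; 376; 380; 508; 476; 220; 212; 148];
[:: 340; 324; 356; 352; 480; 448; 192; 200; 136];
[:: 366; 382; 350; 346; 474; 506; 250; 242; 178];
[:: 370; 354; 322; 326; 454; 486; 230; 238; 174];
[:: 390; 406; 438; 434; 306; 274; 18; 26; 90];
[:: 410; 394; 426; 430; 302; 270; 14; 6; 70];
[:: 416; 432; 400; 404; 276; 308; 52; 60; 124];
[:: 444; 428; 396; 392; 264; 296; 40; 32; 96];
[:: 451; 467; 499; 503; 375; 343; 87; 95; 31];
[:: 479; 463; 495; 491; 363; 331; 75; 67; 3];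
[:: 485; 501; 469; 465; 337; 369; 113; 121; 57];
[:: 505; 489; 457; 461; 333; 365; 109; 101; 37];
[:: 516; 532; 564; 560; 688; 656; 912; 920; 984];
[:: 536; 520; 552; 556; 684; 652; 908; 900; 964];
[:: 546; 562; 530; 534; 662; 694; 950; 958; 1022];
[:: 574; 558; 526; 522; 650; 682; 938; 930; 994];
[:: 577; 593; 625; 629; 757; 725; 981; 989; 925];
[:: 605; 589; 621; 617; 745; 713; 969; 961; 897];
[:: 615; 631; 599; 595; 723; 755; 1011; 1019; 955];
[:: 635; 619; 587; 591; 719; 751; 1007; 999; 935];
[:: 655; 671; 703; 699; 571; 539; 795; 787; 851];
[:: 659; 643; 675; 679; 551; 519; 775; 783; 847];
[:: 681; 697; 665; 669; 541; 573; 829; 821; 885];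
[:: 693; 677; 645; 641; 513; 545; 801; 809; 873];
[:: 714; 730; 762; 766; 638; 606; 862; 854; 790];
[:: 726; 710; 742; 738; 610; 578; 834; 842; 778];
[:: 748; 764; 732; 728; 600; 632; 888; 880; 816];
[:: 752; 736; 704; 708; 580; 612; 868; 876; 812];
[:: 771; 787; 819; 823; 951; 919; 663; 671; 735];
[:: 799; 783; 815; 811; 939; 907; 651; 643; 707];
[:: 805; 821; 789; 785; 913; 945; 689; 697; 761];
[:: 825; 809; 777; 781; 909; 941; 685; 677; 741];
[:: 838; 854; 886; 882; 1010; 978; 722; 730; 666];
[:: 858; 842; 874; 878; 1006; 974; 718; 710; 646];
[:: 864; 880; 848; 852; 980; 1012; 756; 764; 700];
[:: 892; 876; 844; 840; 968; 1000; 744; 736; 672];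
[:: 904; 920; 952; 956; 828; 796; 540; 532; 596];
[:: 916; 900; 932; 928; 800; 768; 512; 520; 584];
[:: 942; 958; 926; 922; 794; 826; 570; 562; 626];
[:: 946; 930; 898; 902; 774; 806; 550; 558; 622];
[:: 973; 989; 1021; 1017; 889; 857; 601; 593; 529];
[:: 977; 961; 993; 997; 869; 837; 581; 589; 525];
[:: 1003; 1019; 987; 991; 863; 895; 639; 631; 567];
[:: 1015; 999; 967; 963; 835; 867; 611; 619; 555];
[:: 1033; 1049; 1081; 1085; 1213; 1181; 1437; 1429; 1493];
[:: 1045; 1029; 1061; 1057; 1185; 1153; 1409; 1417; 1481];
[:: 1071; 1087; 1055; 1051; 1179; 1211; 1467; 1459; 1523];
[:: 1075; 1059; 1027; 1031; 1159; 1191; 1447; 1455; 1519];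
[:: 1100; 1116; 1148; 1144; 1272; 1240; 1496; 1488; 1424];
[:: 1104; 1088; 1120; 1124; 1252; 1220; 1476; 1484; 1420];
[:: 1130; 1146; 1114; 1118; 1246; 1278; 1534; 1526; 1462];
[:: 1142; 1126; 1094; 1090; 1218; 1250; 1506; 1514; 1450];
[:: 1154; 1170; 1202; 1206; 1078; 1046; 1302; 1310; 1374];
[:: 1182; 1166; 1198; 1194; 1066; 1034; 1290; 1282; 1346];
[:: 1188; 1204; 1172; 1168; 1040; 1072; 1328; 1336; 1400];
[:: 1208; 1192; 1160; 1164; 1036; 1068; 1324; 1316; 1380];
[:: 1223; 1239; 1271; 1267; 1139; 1107; 1363; 1371; 1307];
[:: 1243; 1227; 1259; 1263; 1135; 1103; 1359; 1351; 1287];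
[:: 1249; 1265; 1233; 1237; 1109; 1141; 1397; 1405; 1341];
[:: 1277; 1261; 1229; 1225; 1097; 1129; 1385; 1377; 1313];
[:: 1294; 1310; 1342; 1338; 1466; 1434; 1178; 1170; 1234];
[:: 1298; 1282; 1314; 1318; 1446; 1414; 1158; 1166; 1230];
[:: 1320; 1336; 1304; 1308; 1436; 1468; 1212; 1204; 1268];
[:: 1332; 1316; 1284; 1280; 1408; 1440; 1184; 1192; 1256];
[:: 1355; 1371; 1403; 1407; 1535; 1503; 1247; 1239; 1175];
[:: 1367; 1351; 1383; 1379; 1507; 1475; 1219; 1227; 1163];
[:: 1389; 1405; 1373; 1369; 1497; 1529; 1273; 1265; 1201];
[:: 1393; 1377; 1345; 1349; 1477; 1509; 1253; 1261; 1197];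
[:: 1413; 1429; 1461; 1457; 1329; 1297; 1041; 1049; 1113];
[:: 1433; 1417; 1449; 1453; 1325; 1293; 1037; 1029; 1093];
[:: 1443; 1459; 1427; 1431; 1303; 1335; 1079; 1087; 1151];
[:: 1471; 1455; 1423; 1419; 1291; 1323; 1067; 1059; 1123];
[:: 1472; 1488; 1520; 1524; 1396; 1364; 1108; 1116; 1052];
[:: 1500; 1484; 1516; 1512; 1384; 1352; 1096; 1088; 1024];
[:: 1510; 1526; 1494; 1490; 1362; 1394; 1138; 1146; 1082];
[:: 1530; 1514; 1482; 1486; 1358; 1390; 1134; 1126; 1062];
[:: 1543; 1559; 1591; 1587; 1715; 1683; 1939; 1947; 2011];
[:: 1563; 1547; 1579; 1583; 1711; 1679; 1935; 1927; 1991];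
[:: 1569; 1585; 1553; 1557; 1685; 1717; 1973; 1981; 2045];
[:: 1597; 1581; 1549; 1545; 1673; 1705; 1961; 1953; 2017];
[:: 1602; 1618; 1650; 1654; 1782; 1750; 2006; 2014; 1950];
[:: 1630; 1614; 1646; 1642; 1770; 1738; 1994; 1986; 1922];
[:: 1636; 1652; 1620; 1616; 1744; 1776; 2032; 2040; 1976];
[:: 1656; 1640; 1608; 1612; 1740; 1772; 2028; 2020; 1956];
[:: 1676; 1692; 1724; 1720; 1592; 1560; 1816; 1808; 1872];
[:: 1680; 1664; 1696; 1700; 1572; 1540; 1796; 1804; 1868];
[:: 1706; 1722; 1690; 1694; 1566; 1598; 1854; 1846; 1910];
[:: 1718; 1702; 1670; 1666; 1538; 1570; 1826; 1834; 1898];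
[:: 1737; 1753; 1785; 1789; 1661; 1629; 1885; 1877; 1813];
[:: 1749; 1733; 1765; 1761; 1633; 1601; 1857; 1865; 1801];
[:: 1775; 1791; 1759; 1755; 1627; 1659; 1915; 1907; 1843];
[:: 1779; 1763; 1731; 1735; 1607; 1639; 1895; 1903; 1839];
[:: 1792; 1808; 1840; 1844; 1972; 1940; 1684; 1692; 1756];
[:: 1820; 1804; 1836; 1832; 1960; 1928; 1672; 1664; 1728];
[:: 1830; 1846; 1814; 1810; 1938; 1970; 1714; 1722; 1786];
[:: 1850; 1834; 1802; 1806; 1934; 1966; 1710; 1702; 1766];
[:: 1861; 1877; 1909; 1905; 2033; 2001; 1745; 1753; 1689];
[:: 1881; 1865; 1897; 1901; 2029; 1997; 1741; 1733; 1669];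
[:: 1891; 1907; 1875; 1879; 2007; 2039; 1783; 1791; 1727];
[:: 1919; 1903; 1871; 1867; 1995; 2027; 1771; 1763; 1699];
[:: 1931; 1947; 1979; 1983; 1855; 1823; 1567; 1559; 1623];
[:: 1943; 1927; 1959; 1955; 1827; 1795; 1539; 1547; 1611];
[:: 1965; 1981; 1949; 1945; 1817; 1849; 1593; 1585; 1649];
[:: 1969; 1953; 1921; 1925; 1797; 1829; 1573; 1581; 1645];
[:: 1998; 2014; 2046; 2042; 1914; 1882; 1626; 1618; 1554];
[:: 2002; 1986; 2018; 2022; 1894; 1862; 1606; 1614; 1550];
[:: 2024; 2040; 2008; 2012; 1884; 1916; 1660; 1652; 1588];
[:: 2036; 2020; 1988; 1984; 1856; 1888; 1632; 1640; 1576];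
[:: 3; 7; 263; 1287; 1286; 1798; 1542; 1670; 1678];
[:: 31; 27; 283; 1307; 1306; 1818; 1562; 1690; 1682];
[:: 37; 33; 289; 1313; 1312; 1824; 1568; 1696; 1704];
[:: 57; 61; 317; 1341; 1340; 1852; 1596; 1724; 1716];
[:: 70; 66; 322; 1346; 1347; 1859; 1603; 1731; 1739];
[:: 90; 94; 350; 1374; 1375; 1887; 1631; 1759; 1751];
[:: 96; 100; 356; 1380; 1381; 1893; 1637; 1765; 1773];
[:: 124; 120; 376; 1400; 1401; 1913; 1657; 1785; 1777];
[:: 136; 140; 396; 1420; 1421; 1933; 1677; 1549; 1541];
[:: 148; 144; 400; 1424; 1425; 1937; 1681; 1553; 1561];
[:: 174; 170; 426; 1450; 1451; 1963; 1707; 1579; 1571];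
[:: 178; 182; 438; 1462; 1463; 1975; 1719; 1591; 1599];
[:: 205; 201; 457; 1481; 1480; 1992; 1736; 1608; 1600];
[:: 209; 213; 469; 1493; 1492; 2004; 1748; 1620; 1628];
[:: 235; 239; 495; 1519; 1518; 2030; 1774; 1646; 1638];
[:: 247; 243; 499; 1523; 1522; 2034; 1778; 1650; 1658];
[:: 260; 256; 0; 1024; 1025; 1537; 1793; 1921; 1929];
[:: 280; 284; 28; 1052; 1053; 1565; 1821; 1949; 1941];
[:: 290; 294; 38; 1062; 1063; 1575; 1831; 1959; 1967];
[:: 318; 314; 58; 1082; 1083; 1595; 1851; 1979; 1971];
[:: 321; 325; 69; 1093; 1092; 1604; 1860; 1988; 1996];
[:: 349; 345; 89; 1113; 1112; 1624; 1880; 2008; 2000];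
[:: 359; 355; 99; 1123; 1122; 1634; 1890; 2018; 2026];
[:: 379; 383; 127; 1151; 1150; 1662; 1918; 2046; 2038];
[:: 399; 395; 139; 1163; 1162; 1674; 1930; 1802; 1794];
[:: 403; 407; 151; 1175; 1174; 1686; 1942; 1814; 1822];
[:: 425; 429; 173; 1197; 1196; 1708; 1964; 1836; 1828];
[:: 437; 433; 177; 1201; 1200; 1712; 1968; 1840; 1848];
[:: 458; 462; 206; 1230; 1231; 1743; 1999; 1871; 1863];
[:: 470; 466; 210; 1234; 1235; 1747; 2003; 1875; 1883];
[:: 492; 488; 232; 1256; 1257; 1769; 2025; 1897; 1889];
[:: 496; 500; 244; 1268; 1269; 1781; 2037; 1909; 1917];
[:: 525; 521; 777; 1801; 1800; 1288; 1032; 1160; 1152];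
[:: 529; 533; 789; 1813; 1812; 1300; 1044; 1172; 1180];
[:: 555; 559; 815; 1839; 1838; 1326; 1070; 1198; 1190];
[:: 567; 563; 819; 1843; 1842; 1330; 1074; 1202; 1210];
[:: 584; 588; 844; 1868; 1869; 1357; 1101; 1229; 1221];
[:: 596; 592; 848; 1872; 1873; 1361; 1105; 1233; 1241];
[:: 622; 618; 874; 1898; 1899; 1387; 1131; 1259; 1251];
[:: 626; 630; 886; 1910; 1911; 1399; 1143; 1271; 1279];
[:: 646; 642; 898; 1922; 1923; 1411; 1155; 1027; 1035];
[:: 666; 670; 926; 1950; 1951; 1439; 1183; 1055; 1047];
[:: 672; 676; 932; 1956; 1957; 1445; 1189; 1061; 1069];
[:: 700; 696; 952; 1976; 1977; 1465; 1209; 1081; 1073];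
[:: 707; 711; 967; 1991; 1990; 1478; 1222; 1094; 1102];
[:: 735; 731; 987; 2011; 2010; 1498; 1242; 1114; 1106];
[:: 741; 737; 993; 2017; 2016; 1504; 1248; 1120; 1128];
[:: 761; 765; 1021; 2045; 2044; 1532; 1276; 1148; 1140];
[:: 778; 782; 526; 1550; 1551; 1039; 1295; 1423; 1415];
[:: 790; 786; 530; 1554; 1555; 1043; 1299; 1427; 1435];
[:: 812; 808; 552; 1576; 1577; 1065; 1321; 1449; 1441];
[:: 816; 820; 564; 1588; 1589; 1077; 1333; 1461; 1469];
[:: 847; 843; 587; 1611; 1610; 1098; 1354; 1482; 1474];
[:: 851; 855; 599; 1623; 1622; 1110; 1366; 1494; 1502];
[:: 873; 877; 621; 1645; 1644; 1132; 1388; 1516; 1508];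
[:: 885; 881; 625; 1649; 1648; 1136; 1392; 1520; 1528];
[:: 897; 901; 645; 1669; 1668; 1156; 1412; 1284; 1292];
[:: 925; 921; 665; 1689; 1688; 1176; 1432; 1304; 1296];
[:: 935; 931; 675; 1699; 1698; 1186; 1442; 1314; 1322];
[:: 955; 959; 703; 1727; 1726; 1214; 1470; 1342; 1334];
[:: 964; 960; 704; 1728; 1729; 1217; 1473; 1345; 1353];
[:: 984; 988; 732; 1756; 1757; 1245; 1501; 1373; 1365];
[:: 994; 998; 742; 1766; 1767; 1255; 1511; 1383; 1391];
[:: 1022; 1018; 762; 1786; 1787; 1275; 1531; 1403; 1395];
[:: 1024; 1028; 1284; 260; 261; 773; 517; 645; 653];
[:: 1052; 1048; 1304; 280; 281; 793; 537; 665; 657];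
[:: 1062; 1058; 1314; 290; 291; 803; 547; 675; 683];
[:: 1082; 1086; 1342; 318; 319; 831; 575; 703; 695];
[:: 1093; 1089; 1345; 321; 320; 832; 576; 704; 712];
[:: 1113; 1117; 1373; 349; 348; 860; 604; 732; 724];
[:: 1123; 1127; 1383; 359; 358; 870; 614; 742; 750];
[:: 1151; 1147; 1403; 379; 378; 890; 634; 762; 754];
[:: 1163; 1167; 1423; 399; 398; 910; 654; 526; 518];
[:: 1175; 1171; 1427; 403; 402; 914; 658; 530; 538];
[:: 1197; 1193; 1449; 425; 424; 936; 680; 552; 544];
[:: 1201; 1205; 1461; 437; 436; 948; 692; 564; 572];
[:: 1230; 1226; 1482; 458; 459; 971; 715; 587; 579];
[:: 1234; 1238; 1494; 470; 471; 983; 727; 599; 607];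
[:: 1256; 1260; 1516; 492; 493; 1005; 749; 621; 613];
[:: 1268; 1264; 1520; 496; 497; 1009; 753; 625; 633];
[:: 1287; 1283; 1027; 3; 2; 514; 770; 898; 906];
[:: 1307; 1311; 1055; 31; 30; 542; 798; 926; 918];
[:: 1313; 1317; 1061; 37; 36; 548; 804; 932; 940];
[:: 1341; 1337; 1081; 57; 56; 568; 824; 952; 944];
[:: 1346; 1350; 1094; 70; 71; 583; 839; 967; 975];
[:: 1374; 1370; 1114; 90; 91; 603; 859; 987; 979];
[:: 1380; 1376; 1120; 96; 97; 609; 865; 993; 1001];
[:: 1400; 1404; 1148; 124; 125; 637; 893; 1021; 1013];
[:: 1420; 1416; 1160; 136; 137; 649; 905; 777; 769];
[:: 1424; 1428; 1172; 148; 149; 661; 917; 789; 797];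
[:: 1450; 1454; 1198; 174; 175; 687; 943; 815; 807];
[:: 1462; 1458; 1202; 178; 179; 691; 947; 819; 827];
[:: 1481; 1485; 1229; 205; 204; 716; 972; 844; 836];
[:: 1493; 1489; 1233; 209; 208; 720; 976; 848; 856];
[:: 1519; 1515; 1259; 235; 234; 746; 1002; 874; 866];
[:: 1523; 1527; 1271; 247; 246; 758; 1014; 886; 894];
[:: 1550; 1546; 1802; 778; 779; 267; 11; 139; 131];
[:: 1554; 1558; 1814; 790; 791; 279; 23; 151; 159];
[:: 1576; 1580; 1836; 812; 813; 301; 45; 173; 165];
[:: 1588; 1584; 1840; 816; 817; 305; 49; 177; 185];
[:: 1611; 1615; 1871; 847; 846; 334; 78; 206; 198];
[:: 1623; 1619; 1875; 851; 850; 338; 82; 210; 218];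
[:: 1645; 1641; 1897; 873; 872; 360; 104; 232; 224];
[:: 1649; 1653; 1909; 885; 884; 372; 116; 244; 252];
[:: 1669; 1665; 1921; 897; 896; 384; 128; 0; 8];
[:: 1689; 1693; 1949; 925; 924; 412; 156; 28; 20];
[:: 1699; 1703; 1959; 935; 934; 422; 166; 38; 46];
[:: 1727; 1723; 1979; 955; 954; 442; 186; 58; 50];
[:: 1728; 1732; 1988; 964; 965; 453; 197; 69; 77];
[:: 1756; 1752; 2008; 984; 985; 473; 217; 89; 81];
[:: 1766; 1762; 2018; 994; 995; 483; 227; 99; 107];
[:: 1786; 1790; 2046; 1022; 1023; 511; 255; 127; 119];
[:: 1801; 1805; 1549; 525; 524; 12; 268; 396; 388];
[:: 1813; 1809; 1553; 529; 528; 16; 272; 400; 408];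
[:: 1839; 1835; 1579; 555; 554; 42; 298; 426; 418];
[:: 1843; 1847; 1591; 567; 566; 54; 310; 438; 446];
[:: 1868; 1864; 1608; 584; 585; 73; 329; 457; 449];
[:: 1872; 1876; 1620; 596; 597; 85; 341; 469; 477];
[:: 1898; 1902; 1646; 622; 623; 111; 367; 495; 487];
[:: 1910; 1906; 1650; 626; 627; 115; 371; 499; 507];
[:: 1922; 1926; 1670; 646; 647; 135; 391; 263; 271];
[:: 1950; 1946; 1690; 666; 667; 155; 411; 283; 275];
[:: 1956; 1952; 1696; 672; 673; 161; 417; 289; 297];
[:: 1976; 1980; 1724; 700; 701; 189; 445; 317; 309];
[:: 1991; 1987; 1731; 707; 706; 194; 450; 322; 330];
[:: 2011; 2015; 1759; 735; 734; 222; 478; 350; 342];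
[:: 2017; 2021; 1765; 741; 740; 228; 484; 356; 364];
[:: 2045; 2041; 1785; 761; 760; 248; 504; 376; 368];
[:: 0; 16; 18; 50; 51; 1075; 1203; 1267; 1275];
[:: 28; 12; 14; 46; 47; 1071; 1199; 1263; 1255];
[:: 38; 54; 52; 20; 21; 1045; 1173; 1237; 1245];
[:: 58; 42; 40; 8; 9; 1033; 1161; 1225; 1217];
[:: 69; 85; 87; 119; 118; 1142; 1270; 1206; 1214];
[:: 89; 73; 75; 107; 106; 1130; 1258; 1194; 1186];
[:: 99; 115; 113; 81; 80; 1104; 1232; 1168; 1176];
[:: 127; 111; 109; 77; 76; 1100; 1228; 1164; 1156];
[:: 139; 155; 153; 185; 184; 1208; 1080; 1144; 1136];
[:: 151; 135; 133; 165; 164; 1188; 1060; 1124; 1132];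
[:: 173; 189; 191; 159; 158; 1182; 1054; 1118; 1110];
[:: 177; 161; 163; 131; 130; 1154; 1026; 1090; 1098];
[:: 206; 222; 220; 252; 253; 1277; 1149; 1085; 1077];
[:: 210; 194; 192; 224; 225; 1249; 1121; 1057; 1065];
[:: 232; 248; 250; 218; 219; 1243; 1115; 1051; 1043];
[:: 244; 228; 230; 198; 199; 1223; 1095; 1031; 1039];
[:: 263; 279; 277; 309; 308; 1332; 1460; 1524; 1532];
[:: 283; 267; 265; 297; 296; 1320; 1448; 1512; 1504];
[:: 289; 305; 307; 275; 274; 1298; 1426; 1490; 1498];
[:: 317; 301; 303; 271; 270; 1294; 1422; 1486; 1478];
[:: 322; 338; 336; 368; 369; 1393; 1521; 1457; 1465];
[:: 350; 334; 332; 364; 365; 1389; 1517; 1453; 1445];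
[:: 356; 372; 374; 342; 343; 1367; 1495; 1431; 1439];
[:: 376; 360; 362; 330; 331; 1355; 1483; 1419; 1411];
[:: 396; 412; 414; 446; 447; 1471; 1343; 1407; 1399];
[:: 400; 384; 386; 418; 419; 1443; 1315; 1379; 1387];
[:: 426; 442; 440; 408; 409; 1433; 1305; 1369; 1361];
[:: 438; 422; 420; 388; 389; 1413; 1285; 1349; 1357];
[:: 457; 473; 475; 507; 506; 1530; 1402; 1338; 1330];
[:: 469; 453; 455; 487; 486; 1510; 1382; 1318; 1326];
[:: 495; 511; 509; 477; 476; 1500; 1372; 1308; 1300];
[:: 499; 483; 481; 449; 448; 1472; 1344; 1280; 1288];
[:: 526; 542; 540; 572; 573; 1597; 1725; 1789; 1781];
[:: 530; 514; 512; 544; 545; 1569; 1697; 1761; 1769];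
[:: 552; 568; 570; 538; 539; 1563; 1691; 1755; 1747];
[:: 564; 548; 550; 518; 519; 1543; 1671; 1735; 1743];
[:: 587; 603; 601; 633; 632; 1656; 1784; 1720; 1712];
[:: 599; 583; 581; 613; 612; 1636; 1764; 1700; 1708];
[:: 621; 637; 639; 607; 606; 1630; 1758; 1694; 1686];
[:: 625; 609; 611; 579; 578; 1602; 1730; 1666; 1674];
[:: 645; 661; 663; 695; 694; 1718; 1590; 1654; 1662];
[:: 665; 649; 651; 683; 682; 1706; 1578; 1642; 1634];
[:: 675; 691; 689; 657; 656; 1680; 1552; 1616; 1624];
[:: 703; 687; 685; 653; 652; 1676; 1548; 1612; 1604];
[:: 704; 720; 722; 754; 755; 1779; 1651; 1587; 1595];
[:: 732; 716; 718; 750; 751; 1775; 1647; 1583; 1575];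
[:: 742; 758; 756; 724; 725; 1749; 1621; 1557; 1565];
[:: 762; 746; 744; 712; 713; 1737; 1609; 1545; 1537];
[:: 777; 793; 795; 827; 826; 1850; 1978; 2042; 2034];
[:: 789; 773; 775; 807; 806; 1830; 1958; 2022; 2030];
[:: 815; 831; 829; 797; 796; 1820; 1948; 2012; 2004];
[:: 819; 803; 801; 769; 768; 1792; 1920; 1984; 1992];
[:: 844; 860; 862; 894; 895; 1919; 2047; 1983; 1975];
[:: 848; 832; 834; 866; 867; 1891; 2019; 1955; 1963];
[:: 874; 890; 888; 856; 857; 1881; 2009; 1945; 1937];
[:: 886; 870; 868; 836; 837; 1861; 1989; 1925; 1933];
[:: 898; 914; 912; 944; 945; 1969; 1841; 1905; 1913];
[:: 926; 910; 908; 940; 941; 1965; 1837; 1901; 1893];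
[:: 932; 948; 950; 918; 919; 1943; 1815; 1879; 1887];
[:: 952; 936; 938; 906; 907; 1931; 1803; 1867; 1859];
[:: 967; 983; 981; 1013; 1012; 2036; 1908; 1844; 1852];
[:: 987; 971; 969; 1001; 1000; 2024; 1896; 1832; 1824];
[:: 993; 1009; 1011; 979; 978; 2002; 1874; 1810; 1818];
[:: 1021; 1005; 1007; 975; 974; 1998; 1870; 1806; 1798];
[:: 1027; 1043; 1041; 1073; 1072; 48; 176; 240; 248];
[:: 1055; 1039; 1037; 1069; 1068; 44; 172; 236; 228];
[:: 1061; 1077; 1079; 1047; 1046; 22; 150; 214; 222];
[:: 1081; 1065; 1067; 1035; 1034; 10; 138; 202; 194];
[:: 1094; 1110; 1108; 1140; 1141; 117; 245; 181; 189];
[:: 1114; 1098; 1096; 1128; 1129; 105; 233; 169; 161];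
[:: 1120; 1136; 1138; 1106; 1107; 83; 211; 147; 155];
[:: 1148; 1132; 1134; 1102; 1103; 79; 207; 143; 135];
[:: 1160; 1176; 1178; 1210; 1211; 187; 59; 123; 115];
[:: 1172; 1156; 1158; 1190; 1191; 167; 39; 103; 111];
[:: 1198; 1214; 1212; 1180; 1181; 157; 29; 93; 85];
[:: 1202; 1186; 1184; 1152; 1153; 129; 1; 65; 73];
[:: 1229; 1245; 1247; 1279; 1278; 254; 126; 62; 54];
[:: 1233; 1217; 1219; 1251; 1250; 226; 98; 34; 42];
[:: 1259; 1275; 1273; 1241; 1240; 216; 88; 24; 16];
[:: 1271; 1255; 1253; 1221; 1220; 196; 68; 4; 12];
[:: 1284; 1300; 1302; 1334; 1335; 311; 439; 503; 511];
[:: 1304; 1288; 1290; 1322; 1323; 299; 427; 491; 483];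
[:: 1314; 1330; 1328; 1296; 1297; 273; 401; 465; 473];
[:: 1342; 1326; 1324; 1292; 1293; 269; 397; 461; 453];
[:: 1345; 1361; 1363; 1395; 1394; 370; 498; 434; 442];
[:: 1373; 1357; 1359; 1391; 1390; 366; 494; 430; 422];
[:: 1383; 1399; 1397; 1365; 1364; 340; 468; 404; 412];
[:: 1403; 1387; 1385; 1353; 1352; 328; 456; 392; 384];
[:: 1423; 1439; 1437; 1469; 1468; 444; 316; 380; 372];
[:: 1427; 1411; 1409; 1441; 1440; 416; 288; 352; 360];
[:: 1449; 1465; 1467; 1435; 1434; 410; 282; 346; 338];
[:: 1461; 1445; 1447; 1415; 1414; 390; 262; 326; 334];
[:: 1482; 1498; 1496; 1528; 1529; 505; 377; 313; 305];
[:: 1494; 1478; 1476; 1508; 1509; 485; 357; 293; 301];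
[:: 1516; 1532; 1534; 1502; 1503; 479; 351; 287; 279];
[:: 1520; 1504; 1506; 1474; 1475; 451; 323; 259; 267];
[:: 1549; 1565; 1567; 1599; 1598; 574; 702; 766; 758];
[:: 1553; 1537; 1539; 1571; 1570; 546; 674; 738; 746];
[:: 1579; 1595; 1593; 1561; 1560; 536; 664; 728; 720];
[:: 1591; 1575; 1573; 1541; 1540; 516; 644; 708; 716];
[:: 1608; 1624; 1626; 1658; 1659; 635; 763; 699; 691];
[:: 1620; 1604; 1606; 1638; 1639; 615; 743; 679; 687];
[:: 1646; 1662; 1660; 1628; 1629; 605; 733; 669; 661];
[:: 1650; 1634; 1632; 1600; 1601; 577; 705; 641; 649];
[:: 1670; 1686; 1684; 1716; 1717; 693; 565; 629; 637];
[:: 1690; 1674; 1672; 1704; 1705; 681; 553; 617; 609];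
[:: 1696; 1712; 1714; 1682; 1683; 659; 531; 595; 603];
[:: 1724; 1708; 1710; 1678; 1679; 655; 527; 591; 583];
[:: 1731; 1747; 1745; 1777; 1776; 752; 624; 560; 568];
[:: 1759; 1743; 1741; 1773; 1772; 748; 620; 556; 548];
[:: 1765; 1781; 1783; 1751; 1750; 726; 598; 534; 542];
[:: 1785; 1769; 1771; 1739; 1738; 714; 586; 522; 514];
[:: 1802; 1818; 1816; 1848; 1849; 825; 953; 1017; 1009];
[:: 1814; 1798; 1796; 1828; 1829; 805; 933; 997; 1005];
[:: 1836; 1852; 1854; 1822; 1823; 799; 927; 991; 983];
[:: 1840; 1824; 1826; 1794; 1795; 771; 899; 963; 971];
[:: 1871; 1887; 1885; 1917; 1916; 892; 1020; 956; 948];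
[:: 1875; 1859; 1857; 1889; 1888; 864; 992; 928; 936];
[:: 1897; 1913; 1915; 1883; 1882; 858; 986; 922; 914];
[:: 1909; 1893; 1895; 1863; 1862; 838; 966; 902; 910];
[:: 1921; 1937; 1939; 1971; 1970; 946; 818; 882; 890];
[:: 1949; 1933; 1935; 1967; 1966; 942; 814; 878; 870];
[:: 1959; 1975; 1973; 1941; 1940; 916; 788; 852; 860];
[:: 1979; 1963; 1961; 1929; 1928; 904; 776; 840; 832];
[:: 1988; 2004; 2006; 2038; 2039; 1015; 887; 823; 831];
[:: 2008; 1992; 1994; 2026; 2027; 1003; 875; 811; 803];
[:: 2018; 2034; 2032; 2000; 2001; 977; 849; 785; 793];
[:: 2046; 2030; 2028; 1996; 1997; 973; 845; 781; 773];
[:: 5; 4; 260; 388; 132; 644; 676; 684; 748];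
[:: 25; 24; 280; 408; 152; 664; 696; 688; 752];
[:: 35; 34; 290; 418; 162; 674; 642; 650; 714];
[:: 63; 62; 318; 446; 190; 702; 670; 662; 726];
[:: 64; 65; 321; 449; 193; 705; 737; 745; 681];
[:: 92; 93; 349; 477; 221; 733; 765; 757; 693];
[:: 102; 103; 359; 487; 231; 743; 711; 719; 655];
[:: 122; 123; 379; 507; 251; 763; 731; 723; 659];
[:: 142; 143; 399; 271; 15; 527; 559; 551; 615];
[:: 146; 147; 403; 275; 19; 531; 563; 571; 635];
[:: 168; 169; 425; 297; 41; 553; 521; 513; 577];
[:: 180; 181; 437; 309; 53; 565; 533; 541; 605];
[:: 203; 202; 458; 330; 74; 586; 618; 610; 546];
[:: 215; 214; 470; 342; 86; 598; 630; 638; 574];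
[:: 237; 236; 492; 364; 108; 620; 588; 580; 516];
[:: 241; 240; 496; 368; 112; 624; 592; 600; 536];
[:: 258; 259; 3; 131; 387; 899; 931; 939; 1003];
[:: 286; 287; 31; 159; 415; 927; 959; 951; 1015];
[:: 292; 293; 37; 165; 421; 933; 901; 909; 973];
[:: 312; 313; 57; 185; 441; 953; 921; 913; 977];
[:: 327; 326; 70; 198; 454; 966; 998; 1006; 942];
[:: 347; 346; 90; 218; 474; 986; 1018; 1010; 946];
[:: 353; 352; 96; 224; 480; 992; 960; 968; 904];
[:: 381; 380; 124; 252; 508; 1020; 988; 980; 916];
[:: 393; 392; 136; 8; 264; 776; 808; 800; 864];
[:: 405; 404; 148; 20; 276; 788; 820; 828; 892];
[:: 431; 430; 174; 46; 302; 814; 782; 774; 838];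
[:: 435; 434; 178; 50; 306; 818; 786; 794; 858];
[:: 460; 461; 205; 77; 333; 845; 877; 869; 805];
[:: 464; 465; 209; 81; 337; 849; 881; 889; 825];
[:: 490; 491; 235; 107; 363; 875; 843; 835; 771];
[:: 502; 503; 247; 119; 375; 887; 855; 863; 799];
[:: 523; 522; 778; 906; 650; 138; 170; 162; 226];
[:: 535; 534; 790; 918; 662; 150; 182; 190; 254];
[:: 557; 556; 812; 940; 684; 172; 140; 132; 196];
[:: 561; 560; 816; 944; 688; 176; 144; 152; 216];
[:: 590; 591; 847; 975; 719; 207; 239; 231; 167];
[:: 594; 595; 851; 979; 723; 211; 243; 251; 187];
[:: 616; 617; 873; 1001; 745; 233; 201; 193; 129];
[:: 628; 629; 885; 1013; 757; 245; 213; 221; 157];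
[:: 640; 641; 897; 769; 513; 1; 33; 41; 105];
[:: 668; 669; 925; 797; 541; 29; 61; 53; 117];
[:: 678; 679; 935; 807; 551; 39; 7; 15; 79];
[:: 698; 699; 955; 827; 571; 59; 27; 19; 83];
[:: 709; 708; 964; 836; 580; 68; 100; 108; 44];
[:: 729; 728; 984; 856; 600; 88; 120; 112; 48];
[:: 739; 738; 994; 866; 610; 98; 66; 74; 10];
[:: 767; 766; 1022; 894; 638; 126; 94; 86; 22];
[:: 780; 781; 525; 653; 909; 397; 429; 421; 485];
[:: 784; 785; 529; 657; 913; 401; 433; 441; 505];
[:: 810; 811; 555; 683; 939; 427; 395; 387; 451];
[:: 822; 823; 567; 695; 951; 439; 407; 415; 479];
[:: 841; 840; 584; 712; 968; 456; 488; 480; 416];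
[:: 853; 852; 596; 724; 980; 468; 500; 508; 444];
[:: 879; 878; 622; 750; 1006; 494; 462; 454; 390];
[:: 883; 882; 626; 754; 1010; 498; 466; 474; 410];
[:: 903; 902; 646; 518; 774; 262; 294; 302; 366];
[:: 923; 922; 666; 538; 794; 282; 314; 306; 370];
[:: 929; 928; 672; 544; 800; 288; 256; 264; 328];
[:: 957; 956; 700; 572; 828; 316; 284; 276; 340];
[:: 962; 963; 707; 579; 835; 323; 355; 363; 299];
[:: 990; 991; 735; 607; 863; 351; 383; 375; 311];
[:: 996; 997; 741; 613; 869; 357; 325; 333; 269];
[:: 1016; 1017; 761; 633; 889; 377; 345; 337; 273];
[:: 1030; 1031; 1287; 1415; 1159; 1671; 1703; 1711; 1775];
[:: 1050; 1051; 1307; 1435; 1179; 1691; 1723; 1715; 1779];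
[:: 1056; 1057; 1313; 1441; 1185; 1697; 1665; 1673; 1737];
[:: 1084; 1085; 1341; 1469; 1213; 1725; 1693; 1685; 1749];
[:: 1091; 1090; 1346; 1474; 1218; 1730; 1762; 1770; 1706];
[:: 1119; 1118; 1374; 1502; 1246; 1758; 1790; 1782; 1718];
[:: 1125; 1124; 1380; 1508; 1252; 1764; 1732; 1740; 1676];
[:: 1145; 1144; 1400; 1528; 1272; 1784; 1752; 1744; 1680];
[:: 1165; 1164; 1420; 1292; 1036; 1548; 1580; 1572; 1636];
[:: 1169; 1168; 1424; 1296; 1040; 1552; 1584; 1592; 1656];
[:: 1195; 1194; 1450; 1322; 1066; 1578; 1546; 1538; 1602];
[:: 1207; 1206; 1462; 1334; 1078; 1590; 1558; 1566; 1630];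
[:: 1224; 1225; 1481; 1353; 1097; 1609; 1641; 1633; 1569];
[:: 1236; 1237; 1493; 1365; 1109; 1621; 1653; 1661; 1597];
[:: 1262; 1263; 1519; 1391; 1135; 1647; 1615; 1607; 1543];
[:: 1266; 1267; 1523; 1395; 1139; 1651; 1619; 1627; 1563];
[:: 1281; 1280; 1024; 1152; 1408; 1920; 1952; 1960; 2024];
[:: 1309; 1308; 1052; 1180; 1436; 1948; 1980; 1972; 2036];
[:: 1319; 1318; 1062; 1190; 1446; 1958; 1926; 1934; 1998];
[:: 1339; 1338; 1082; 1210; 1466; 1978; 1946; 1938; 2002];
[:: 1348; 1349; 1093; 1221; 1477; 1989; 2021; 2029; 1965];
[:: 1368; 1369; 1113; 1241; 1497; 2009; 2041; 2033; 1969];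
[:: 1378; 1379; 1123; 1251; 1507; 2019; 1987; 1995; 1931];
[:: 1406; 1407; 1151; 1279; 1535; 2047; 2015; 2007; 1943];
[:: 1418; 1419; 1163; 1035; 1291; 1803; 1835; 1827; 1891];
[:: 1430; 1431; 1175; 1047; 1303; 1815; 1847; 1855; 1919];
[:: 1452; 1453; 1197; 1069; 1325; 1837; 1805; 1797; 1861];
[:: 1456; 1457; 1201; 1073; 1329; 1841; 1809; 1817; 1881];
[:: 1487; 1486; 1230; 1102; 1358; 1870; 1902; 1894; 1830];
[:: 1491; 1490; 1234; 1106; 1362; 1874; 1906; 1914; 1850];
[:: 1513; 1512; 1256; 1128; 1384; 1896; 1864; 1856; 1792];
[:: 1525; 1524; 1268; 1140; 1396; 1908; 1876; 1884; 1820];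
[:: 1544; 1545; 1801; 1929; 1673; 1161; 1193; 1185; 1249];
[:: 1556; 1557; 1813; 1941; 1685; 1173; 1205; 1213; 1277];
[:: 1582; 1583; 1839; 1967; 1711; 1199; 1167; 1159; 1223];
[:: 1586; 1587; 1843; 1971; 1715; 1203; 1171; 1179; 1243];
[:: 1613; 1612; 1868; 1996; 1740; 1228; 1260; 1252; 1188];
[:: 1617; 1616; 1872; 2000; 1744; 1232; 1264; 1272; 1208];
[:: 1643; 1642; 1898; 2026; 1770; 1258; 1226; 1218; 1154];
[:: 1655; 1654; 1910; 2038; 1782; 1270; 1238; 1246; 1182];
[:: 1667; 1666; 1922; 1794; 1538; 1026; 1058; 1066; 1130];
[:: 1695; 1694; 1950; 1822; 1566; 1054; 1086; 1078; 1142];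
[:: 1701; 1700; 1956; 1828; 1572; 1060; 1028; 1036; 1100];
[:: 1721; 1720; 1976; 1848; 1592; 1080; 1048; 1040; 1104];
[:: 1734; 1735; 1991; 1863; 1607; 1095; 1127; 1135; 1071];
[:: 1754; 1755; 2011; 1883; 1627; 1115; 1147; 1139; 1075];
[:: 1760; 1761; 2017; 1889; 1633; 1121; 1089; 1097; 1033];
[:: 1788; 1789; 2045; 1917; 1661; 1149; 1117; 1109; 1045];
[:: 1807; 1806; 1550; 1678; 1934; 1422; 1454; 1446; 1510];
[:: 1811; 1810; 1554; 1682; 1938; 1426; 1458; 1466; 1530];
[:: 1833; 1832; 1576; 1704; 1960; 1448; 1416; 1408; 1472];
[:: 1845; 1844; 1588; 1716; 1972; 1460; 1428; 1436; 1500];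
[:: 1866; 1867; 1611; 1739; 1995; 1483; 1515; 1507; 1443];
[:: 1878; 1879; 1623; 1751; 2007; 1495; 1527; 1535; 1471];
[:: 1900; 1901; 1645; 1773; 2029; 1517; 1485; 1477; 1413];
[:: 1904; 1905; 1649; 1777; 2033; 1521; 1489; 1497; 1433];
[:: 1924; 1925; 1669; 1541; 1797; 1285; 1317; 1325; 1389];
[:: 1944; 1945; 1689; 1561; 1817; 1305; 1337; 1329; 1393];
[:: 1954; 1955; 1699; 1571; 1827; 1315; 1283; 1291; 1355];
[:: 1982; 1983; 1727; 1599; 1855; 1343; 1311; 1303; 1367];
[:: 1985; 1984; 1728; 1600; 1856; 1344; 1376; 1384; 1320];
[:: 2013; 2012; 1756; 1628; 1884; 1372; 1404; 1396; 1332];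
[:: 2023; 2022; 1766; 1638; 1894; 1382; 1350; 1358; 1294];
[:: 2043; 2042; 1786; 1658; 1914; 1402; 1370; 1362; 1298];
[:: 14; 1038; 1030; 1062; 1070; 1582; 1580; 1581; 1583];
[:: 18; 1042; 1050; 1082; 1074; 1586; 1584; 1585; 1587];
[:: 40; 1064; 1056; 1024; 1032; 1544; 1546; 1547; 1545];
[:: 52; 1076; 1084; 1052; 1044; 1556; 1558; 1559; 1557];
[:: 75; 1099; 1091; 1123; 1131; 1643; 1641; 1640; 1642];
[:: 87; 1111; 1119; 1151; 1143; 1655; 1653; 1652; 1654];
[:: 109; 1133; 1125; 1093; 1101; 1613; 1615; 1614; 1612];
[:: 113; 1137; 1145; 1113; 1105; 1617; 1619; 1618; 1616];
[:: 133; 1157; 1165; 1197; 1189; 1701; 1703; 1702; 1700];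
[:: 153; 1177; 1169; 1201; 1209; 1721; 1723; 1722; 1720];
[:: 163; 1187; 1195; 1163; 1155; 1667; 1665; 1664; 1666];
[:: 191; 1215; 1207; 1175; 1183; 1695; 1693; 1692; 1694];
[:: 192; 1216; 1224; 1256; 1248; 1760; 1762; 1763; 1761];
[:: 220; 1244; 1236; 1268; 1276; 1788; 1790; 1791; 1789];
[:: 230; 1254; 1262; 1230; 1222; 1734; 1732; 1733; 1735];
[:: 250; 1274; 1266; 1234; 1242; 1754; 1752; 1753; 1755];
[:: 265; 1289; 1281; 1313; 1321; 1833; 1835; 1834; 1832];
[:: 277; 1301; 1309; 1341; 1333; 1845; 1847; 1846; 1844];
[:: 303; 1327; 1319; 1287; 1295; 1807; 1805; 1804; 1806];
[:: 307; 1331; 1339; 1307; 1299; 1811; 1809; 1808; 1810];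
[:: 332; 1356; 1348; 1380; 1388; 1900; 1902; 1903; 1901];
[:: 336; 1360; 1368; 1400; 1392; 1904; 1906; 1907; 1905];
[:: 362; 1386; 1378; 1346; 1354; 1866; 1864; 1865; 1867];
[:: 374; 1398; 1406; 1374; 1366; 1878; 1876; 1877; 1879];
[:: 386; 1410; 1418; 1450; 1442; 1954; 1952; 1953; 1955];
[:: 414; 1438; 1430; 1462; 1470; 1982; 1980; 1981; 1983];
[:: 420; 1444; 1452; 1420; 1412; 1924; 1926; 1927; 1925];
[:: 440; 1464; 1456; 1424; 1432; 1944; 1946; 1947; 1945];
[:: 455; 1479; 1487; 1519; 1511; 2023; 2021; 2020; 2022];
[:: 475; 1499; 1491; 1523; 1531; 2043; 2041; 2040; 2042];
[:: 481; 1505; 1513; 1481; 1473; 1985; 1987; 1986; 1984];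
[:: 509; 1533; 1525; 1493; 1501; 2013; 2015; 2014; 2012];
[:: 512; 1536; 1544; 1576; 1568; 1056; 1058; 1059; 1057];
[:: 540; 1564; 1556; 1588; 1596; 1084; 1086; 1087; 1085];
[:: 550; 1574; 1582; 1550; 1542; 1030; 1028; 1029; 1031];
[:: 570; 1594; 1586; 1554; 1562; 1050; 1048; 1049; 1051];
[:: 581; 1605; 1613; 1645; 1637; 1125; 1127; 1126; 1124];
[:: 601; 1625; 1617; 1649; 1657; 1145; 1147; 1146; 1144];
[:: 611; 1635; 1643; 1611; 1603; 1091; 1089; 1088; 1090];
[:: 639; 1663; 1655; 1623; 1631; 1119; 1117; 1116; 1118];
[:: 651; 1675; 1667; 1699; 1707; 1195; 1193; 1192; 1194];
[:: 663; 1687; 1695; 1727; 1719; 1207; 1205; 1204; 1206];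
[:: 685; 1709; 1701; 1669; 1677; 1165; 1167; 1166; 1164];
[:: 689; 1713; 1721; 1689; 1681; 1169; 1171; 1170; 1168];
[:: 718; 1742; 1734; 1766; 1774; 1262; 1260; 1261; 1263];
[:: 722; 1746; 1754; 1786; 1778; 1266; 1264; 1265; 1267];
[:: 744; 1768; 1760; 1728; 1736; 1224; 1226; 1227; 1225];
[:: 756; 1780; 1788; 1756; 1748; 1236; 1238; 1239; 1237];
[:: 775; 1799; 1807; 1839; 1831; 1319; 1317; 1316; 1318];
[:: 795; 1819; 1811; 1843; 1851; 1339; 1337; 1336; 1338];
[:: 801; 1825; 1833; 1801; 1793; 1281; 1283; 1282; 1280];
[:: 829; 1853; 1845; 1813; 1821; 1309; 1311; 1310; 1308];
[:: 834; 1858; 1866; 1898; 1890; 1378; 1376; 1377; 1379];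
[:: 862; 1886; 1878; 1910; 1918; 1406; 1404; 1405; 1407];
[:: 868; 1892; 1900; 1868; 1860; 1348; 1350; 1351; 1349];
[:: 888; 1912; 1904; 1872; 1880; 1368; 1370; 1371; 1369];
[:: 908; 1932; 1924; 1956; 1964; 1452; 1454; 1455; 1453];
[:: 912; 1936; 1944; 1976; 1968; 1456; 1458; 1459; 1457];
[:: 938; 1962; 1954; 1922; 1930; 1418; 1416; 1417; 1419];
[:: 950; 1974; 1982; 1950; 1942; 1430; 1428; 1429; 1431];
[:: 969; 1993; 1985; 2017; 2025; 1513; 1515; 1514; 1512];
[:: 981; 2005; 2013; 2045; 2037; 1525; 1527; 1526; 1524];
[:: 1007; 2031; 2023; 1991; 1999; 1487; 1485; 1484; 1486];
[:: 1011; 2035; 2043; 2011; 2003; 1491; 1489; 1488; 1490];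
[:: 1037; 13; 5; 37; 45; 557; 559; 558; 556];
[:: 1041; 17; 25; 57; 49; 561; 563; 562; 560];
[:: 1067; 43; 35; 3; 11; 523; 521; 520; 522];
[:: 1079; 55; 63; 31; 23; 535; 533; 532; 534];
[:: 1096; 72; 64; 96; 104; 616; 618; 619; 617];
[:: 1108; 84; 92; 124; 116; 628; 630; 631; 629];
[:: 1134; 110; 102; 70; 78; 590; 588; 589; 591];
[:: 1138; 114; 122; 90; 82; 594; 592; 593; 595];
[:: 1158; 134; 142; 174; 166; 678; 676; 677; 679];
[:: 1178; 154; 146; 178; 186; 698; 696; 697; 699];
[:: 1184; 160; 168; 136; 128; 640; 642; 643; 641];
[:: 1212; 188; 180; 148; 156; 668; 670; 671; 669];
[:: 1219; 195; 203; 235; 227; 739; 737; 736; 738];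
[:: 1247; 223; 215; 247; 255; 767; 765; 764; 766];
[:: 1253; 229; 237; 205; 197; 709; 711; 710; 708];
[:: 1273; 249; 241; 209; 217; 729; 731; 730; 728];
[:: 1290; 266; 258; 290; 298; 810; 808; 809; 811];
[:: 1302; 278; 286; 318; 310; 822; 820; 821; 823];
[:: 1324; 300; 292; 260; 268; 780; 782; 783; 781];
[:: 1328; 304; 312; 280; 272; 784; 786; 787; 785];
[:: 1359; 335; 327; 359; 367; 879; 877; 876; 878];
[:: 1363; 339; 347; 379; 371; 883; 881; 880; 882];
[:: 1385; 361; 353; 321; 329; 841; 843; 842; 840];
[:: 1397; 373; 381; 349; 341; 853; 855; 854; 852];
[:: 1409; 385; 393; 425; 417; 929; 931; 930; 928];
[:: 1437; 413; 405; 437; 445; 957; 959; 958; 956];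
[:: 1447; 423; 431; 399; 391; 903; 901; 900; 902];
[:: 1467; 443; 435; 403; 411; 923; 921; 920; 922];
[:: 1476; 452; 460; 492; 484; 996; 998; 999; 997];
[:: 1496; 472; 464; 496; 504; 1016; 1018; 1019; 1017];
[:: 1506; 482; 490; 458; 450; 962; 960; 961; 963];
[:: 1534; 510; 502; 470; 478; 990; 988; 989; 991];
[:: 1539; 515; 523; 555; 547; 35; 33; 32; 34];
[:: 1567; 543; 535; 567; 575; 63; 61; 60; 62];
[:: 1573; 549; 557; 525; 517; 5; 7; 6; 4];
[:: 1593; 569; 561; 529; 537; 25; 27; 26; 24];
[:: 1606; 582; 590; 622; 614; 102; 100; 101; 103];
[:: 1626; 602; 594; 626; 634; 122; 120; 121; 123];
[:: 1632; 608; 616; 584; 576; 64; 66; 67; 65];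
[:: 1660; 636; 628; 596; 604; 92; 94; 95; 93];
[:: 1672; 648; 640; 672; 680; 168; 170; 171; 169];
[:: 1684; 660; 668; 700; 692; 180; 182; 183; 181];
[:: 1710; 686; 678; 646; 654; 142; 140; 141; 143];
[:: 1714; 690; 698; 666; 658; 146; 144; 145; 147];
[:: 1741; 717; 709; 741; 749; 237; 239; 238; 236];
[:: 1745; 721; 729; 761; 753; 241; 243; 242; 240];
[:: 1771; 747; 739; 707; 715; 203; 201; 200; 202];
[:: 1783; 759; 767; 735; 727; 215; 213; 212; 214];
[:: 1796; 772; 780; 812; 804; 292; 294; 295; 293];
[:: 1816; 792; 784; 816; 824; 312; 314; 315; 313];
[:: 1826; 802; 810; 778; 770; 258; 256; 257; 259];
[:: 1854; 830; 822; 790; 798; 286; 284; 285; 287];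
[:: 1857; 833; 841; 873; 865; 353; 355; 354; 352];
[:: 1885; 861; 853; 885; 893; 381; 383; 382; 380];
[:: 1895; 871; 879; 847; 839; 327; 325; 324; 326];
[:: 1915; 891; 883; 851; 859; 347; 345; 344; 346];
[:: 1935; 911; 903; 935; 943; 431; 429; 428; 430];
[:: 1939; 915; 923; 955; 947; 435; 433; 432; 434];
[:: 1961; 937; 929; 897; 905; 393; 395; 394; 392];
[:: 1973; 949; 957; 925; 917; 405; 407; 406; 404];
[:: 1994; 970; 962; 994; 1002; 490; 488; 489; 491];
[:: 2006; 982; 990; 1022; 1014; 502; 500; 501; 503];
[:: 2028; 1004; 996; 964; 972; 460; 462; 463; 461];
[:: 2032; 1008; 1016; 984; 976; 464; 466; 467; 465];
[:: 10; 2; 6; 518; 514; 515; 643; 899; 915];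
[:: 22; 30; 26; 538; 542; 543; 671; 927; 911];
[:: 44; 36; 32; 544; 548; 549; 677; 933; 949];
[:: 48; 56; 60; 572; 568; 569; 697; 953; 937];
[:: 79; 71; 67; 579; 583; 582; 710; 966; 982];
[:: 83; 91; 95; 607; 603; 602; 730; 986; 970];
[:: 105; 97; 101; 613; 609; 608; 736; 992; 1008];
[:: 117; 125; 121; 633; 637; 636; 764; 1020; 1004];
[:: 129; 137; 141; 653; 649; 648; 520; 776; 792];
[:: 157; 149; 145; 657; 661; 660; 532; 788; 772];
[:: 167; 175; 171; 683; 687; 686; 558; 814; 830];
[:: 187; 179; 183; 695; 691; 690; 562; 818; 802];
[:: 196; 204; 200; 712; 716; 717; 589; 845; 861];
[:: 216; 208; 212; 724; 720; 721; 593; 849; 833];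
[:: 226; 234; 238; 750; 746; 747; 619; 875; 891];
[:: 254; 246; 242; 754; 758; 759; 631; 887; 871];
[:: 269; 261; 257; 769; 773; 772; 900; 644; 660];
[:: 273; 281; 285; 797; 793; 792; 920; 664; 648];
[:: 299; 291; 295; 807; 803; 802; 930; 674; 690];
[:: 311; 319; 315; 827; 831; 830; 958; 702; 686];
[:: 328; 320; 324; 836; 832; 833; 961; 705; 721];
[:: 340; 348; 344; 856; 860; 861; 989; 733; 717];
[:: 366; 358; 354; 866; 870; 871; 999; 743; 759];
[:: 370; 378; 382; 894; 890; 891; 1019; 763; 747];
[:: 390; 398; 394; 906; 910; 911; 783; 527; 543];
[:: 410; 402; 406; 918; 914; 915; 787; 531; 515];
[:: 416; 424; 428; 940; 936; 937; 809; 553; 569];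
[:: 444; 436; 432; 944; 948; 949; 821; 565; 549];
[:: 451; 459; 463; 975; 971; 970; 842; 586; 602];
[:: 479; 471; 467; 979; 983; 982; 854; 598; 582];
[:: 485; 493; 489; 1001; 1005; 1004; 876; 620; 636];
[:: 505; 497; 501; 1013; 1009; 1008; 880; 624; 608];
[:: 516; 524; 520; 8; 12; 13; 141; 397; 413];
[:: 536; 528; 532; 20; 16; 17; 145; 401; 385];
[:: 546; 554; 558; 46; 42; 43; 171; 427; 443];
[:: 574; 566; 562; 50; 54; 55; 183; 439; 423];
[:: 577; 585; 589; 77; 73; 72; 200; 456; 472];
[:: 605; 597; 593; 81; 85; 84; 212; 468; 452];
[:: 615; 623; 619; 107; 111; 110; 238; 494; 510];
[:: 635; 627; 631; 119; 115; 114; 242; 498; 482];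
[:: 655; 647; 643; 131; 135; 134; 6; 262; 278];
[:: 659; 667; 671; 159; 155; 154; 26; 282; 266];
[:: 681; 673; 677; 165; 161; 160; 32; 288; 304];
[:: 693; 701; 697; 185; 189; 188; 60; 316; 300];
[:: 714; 706; 710; 198; 194; 195; 67; 323; 339];
[:: 726; 734; 730; 218; 222; 223; 95; 351; 335];
[:: 748; 740; 736; 224; 228; 229; 101; 357; 373];
[:: 752; 760; 764; 252; 248; 249; 121; 377; 361];
[:: 771; 779; 783; 271; 267; 266; 394; 138; 154];
[:: 799; 791; 787; 275; 279; 278; 406; 150; 134];
[:: 805; 813; 809; 297; 301; 300; 428; 172; 188];
[:: 825; 817; 821; 309; 305; 304; 432; 176; 160];
[:: 838; 846; 842; 330; 334; 335; 463; 207; 223];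
[:: 858; 850; 854; 342; 338; 339; 467; 211; 195];
[:: 864; 872; 876; 364; 360; 361; 489; 233; 249];
[:: 892; 884; 880; 368; 372; 373; 501; 245; 229];
[:: 904; 896; 900; 388; 384; 385; 257; 1; 17];
[:: 916; 924; 920; 408; 412; 413; 285; 29; 13];
[:: 942; 934; 930; 418; 422; 423; 295; 39; 55];
[:: 946; 954; 958; 446; 442; 443; 315; 59; 43];
[:: 973; 965; 961; 449; 453; 452; 324; 68; 84];
[:: 977; 985; 989; 477; 473; 472; 344; 88; 72];
[:: 1003; 995; 999; 487; 483; 482; 354; 98; 114];
[:: 1015; 1023; 1019; 507; 511; 510; 382; 126; 110];
[:: 1033; 1025; 1029; 1541; 1537; 1536; 1664; 1920; 1936];
[:: 1045; 1053; 1049; 1561; 1565; 1564; 1692; 1948; 1932];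
[:: 1071; 1063; 1059; 1571; 1575; 1574; 1702; 1958; 1974];
[:: 1075; 1083; 1087; 1599; 1595; 1594; 1722; 1978; 1962];
[:: 1100; 1092; 1088; 1600; 1604; 1605; 1733; 1989; 2005];
[:: 1104; 1112; 1116; 1628; 1624; 1625; 1753; 2009; 1993];
[:: 1130; 1122; 1126; 1638; 1634; 1635; 1763; 2019; 2035];
[:: 1142; 1150; 1146; 1658; 1662; 1663; 1791; 2047; 2031];
[:: 1154; 1162; 1166; 1678; 1674; 1675; 1547; 1803; 1819];
[:: 1182; 1174; 1170; 1682; 1686; 1687; 1559; 1815; 1799];
[:: 1188; 1196; 1192; 1704; 1708; 1709; 1581; 1837; 1853];
[:: 1208; 1200; 1204; 1716; 1712; 1713; 1585; 1841; 1825];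
[:: 1223; 1231; 1227; 1739; 1743; 1742; 1614; 1870; 1886];
[:: 1243; 1235; 1239; 1751; 1747; 1746; 1618; 1874; 1858];
[:: 1249; 1257; 1261; 1773; 1769; 1768; 1640; 1896; 1912];
[:: 1277; 1269; 1265; 1777; 1781; 1780; 1652; 1908; 1892];
[:: 1294; 1286; 1282; 1794; 1798; 1799; 1927; 1671; 1687];
[:: 1298; 1306; 1310; 1822; 1818; 1819; 1947; 1691; 1675];
[:: 1320; 1312; 1316; 1828; 1824; 1825; 1953; 1697; 1713];
[:: 1332; 1340; 1336; 1848; 1852; 1853; 1981; 1725; 1709];
[:: 1355; 1347; 1351; 1863; 1859; 1858; 1986; 1730; 1746];
[:: 1367; 1375; 1371; 1883; 1887; 1886; 2014; 1758; 1742];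
[:: 1389; 1381; 1377; 1889; 1893; 1892; 2020; 1764; 1780];
[:: 1393; 1401; 1405; 1917; 1913; 1912; 2040; 1784; 1768];
[:: 1413; 1421; 1417; 1929; 1933; 1932; 1804; 1548; 1564];
[:: 1433; 1425; 1429; 1941; 1937; 1936; 1808; 1552; 1536];
[:: 1443; 1451; 1455; 1967; 1963; 1962; 1834; 1578; 1594];
[:: 1471; 1463; 1459; 1971; 1975; 1974; 1846; 1590; 1574];
[:: 1472; 1480; 1484; 1996; 1992; 1993; 1865; 1609; 1625];
[:: 1500; 1492; 1488; 2000; 2004; 2005; 1877; 1621; 1605];
[:: 1510; 1518; 1514; 2026; 2030; 2031; 1903; 1647; 1663];
[:: 1530; 1522; 1526; 2038; 2034; 2035; 1907; 1651; 1635];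
[:: 1543; 1551; 1547; 1035; 1039; 1038; 1166; 1422; 1438];
[:: 1563; 1555; 1559; 1047; 1043; 1042; 1170; 1426; 1410];
[:: 1569; 1577; 1581; 1069; 1065; 1064; 1192; 1448; 1464];
[:: 1597; 1589; 1585; 1073; 1077; 1076; 1204; 1460; 1444];
[:: 1602; 1610; 1614; 1102; 1098; 1099; 1227; 1483; 1499];
[:: 1630; 1622; 1618; 1106; 1110; 1111; 1239; 1495; 1479];
[:: 1636; 1644; 1640; 1128; 1132; 1133; 1261; 1517; 1533];
[:: 1656; 1648; 1652; 1140; 1136; 1137; 1265; 1521; 1505];
[:: 1676; 1668; 1664; 1152; 1156; 1157; 1029; 1285; 1301];
[:: 1680; 1688; 1692; 1180; 1176; 1177; 1049; 1305; 1289];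
[:: 1706; 1698; 1702; 1190; 1186; 1187; 1059; 1315; 1331];
[:: 1718; 1726; 1722; 1210; 1214; 1215; 1087; 1343; 1327];
[:: 1737; 1729; 1733; 1221; 1217; 1216; 1088; 1344; 1360];
[:: 1749; 1757; 1753; 1241; 1245; 1244; 1116; 1372; 1356];
[:: 1775; 1767; 1763; 1251; 1255; 1254; 1126; 1382; 1398];
[:: 1779; 1787; 1791; 1279; 1275; 1274; 1146; 1402; 1386];
[:: 1792; 1800; 1804; 1292; 1288; 1289; 1417; 1161; 1177];
[:: 1820; 1812; 1808; 1296; 1300; 1301; 1429; 1173; 1157];
[:: 1830; 1838; 1834; 1322; 1326; 1327; 1455; 1199; 1215];
[:: 1850; 1842; 1846; 1334; 1330; 1331; 1459; 1203; 1187];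
[:: 1861; 1869; 1865; 1353; 1357; 1356; 1484; 1228; 1244];
[:: 1881; 1873; 1877; 1365; 1361; 1360; 1488; 1232; 1216];
[:: 1891; 1899; 1903; 1391; 1387; 1386; 1514; 1258; 1274];
[:: 1919; 1911; 1907; 1395; 1399; 1398; 1526; 1270; 1254];
[:: 1931; 1923; 1927; 1415; 1411; 1410; 1282; 1026; 1042];
[:: 1943; 1951; 1947; 1435; 1439; 1438; 1310; 1054; 1038];
[:: 1965; 1957; 1953; 1441; 1445; 1444; 1316; 1060; 1076];
[:: 1969; 1977; 1981; 1469; 1465; 1464; 1336; 1080; 1064];
[:: 1998; 1990; 1986; 1474; 1478; 1479; 1351; 1095; 1111];
[:: 2002; 2010; 2014; 1502; 1498; 1499; 1371; 1115; 1099];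
[:: 2024; 2016; 2020; 1508; 1504; 1505; 1377; 1121; 1137];
[:: 2036; 2044; 2040; 1528; 1532; 1533; 1405; 1149; 1133];
[:: 2; 18; 22; 23; 1047; 1111; 1107; 1235; 211];
[:: 30; 14; 10; 11; 1035; 1099; 1103; 1231; 207];
[:: 36; 52; 48; 49; 1073; 1137; 1141; 1269; 245];
[:: 56; 40; 44; 45; 1069; 1133; 1129; 1257; 233];
[:: 71; 87; 83; 82; 1106; 1042; 1046; 1174; 150];
[:: 91; 75; 79; 78; 1102; 1038; 1034; 1162; 138];
[:: 97; 113; 117; 116; 1140; 1076; 1072; 1200; 176];
[:: 125; 109; 105; 104; 1128; 1064; 1068; 1196; 172];
[:: 137; 153; 157; 156; 1180; 1244; 1240; 1112; 88];
[:: 149; 133; 129; 128; 1152; 1216; 1220; 1092; 68];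
[:: 175; 191; 187; 186; 1210; 1274; 1278; 1150; 126];
[:: 179; 163; 167; 166; 1190; 1254; 1250; 1122; 98];
[:: 204; 220; 216; 217; 1241; 1177; 1181; 1053; 29];
[:: 208; 192; 196; 197; 1221; 1157; 1153; 1025; 1];
[:: 234; 250; 254; 255; 1279; 1215; 1211; 1083; 59];
[:: 246; 230; 226; 227; 1251; 1187; 1191; 1063; 39];
[:: 261; 277; 273; 272; 1296; 1360; 1364; 1492; 468];
[:: 281; 265; 269; 268; 1292; 1356; 1352; 1480; 456];
[:: 291; 307; 311; 310; 1334; 1398; 1394; 1522; 498];
[:: 319; 303; 299; 298; 1322; 1386; 1390; 1518; 494];
[:: 320; 336; 340; 341; 1365; 1301; 1297; 1425; 401];
[:: 348; 332; 328; 329; 1353; 1289; 1293; 1421; 397];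
[:: 358; 374; 370; 371; 1395; 1331; 1335; 1463; 439];
[:: 378; 362; 366; 367; 1391; 1327; 1323; 1451; 427];
[:: 398; 414; 410; 411; 1435; 1499; 1503; 1375; 351];
[:: 402; 386; 390; 391; 1415; 1479; 1475; 1347; 323];
[:: 424; 440; 444; 445; 1469; 1533; 1529; 1401; 377];
[:: 436; 420; 416; 417; 1441; 1505; 1509; 1381; 357];
[:: 459; 475; 479; 478; 1502; 1438; 1434; 1306; 282];
[:: 471; 455; 451; 450; 1474; 1410; 1414; 1286; 262];
[:: 493; 509; 505; 504; 1528; 1464; 1468; 1340; 316];
[:: 497; 481; 485; 484; 1508; 1444; 1440; 1312; 288];
[:: 524; 540; 536; 537; 1561; 1625; 1629; 1757; 733];
[:: 528; 512; 516; 517; 1541; 1605; 1601; 1729; 705];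
[:: 554; 570; 574; 575; 1599; 1663; 1659; 1787; 763];
[:: 566; 550; 546; 547; 1571; 1635; 1639; 1767; 743];
[:: 585; 601; 605; 604; 1628; 1564; 1560; 1688; 664];
[:: 597; 581; 577; 576; 1600; 1536; 1540; 1668; 644];
[:: 623; 639; 635; 634; 1658; 1594; 1598; 1726; 702];
[:: 627; 611; 615; 614; 1638; 1574; 1570; 1698; 674];
[:: 647; 663; 659; 658; 1682; 1746; 1750; 1622; 598];
[:: 667; 651; 655; 654; 1678; 1742; 1738; 1610; 586];
[:: 673; 689; 693; 692; 1716; 1780; 1776; 1648; 624];
[:: 701; 685; 681; 680; 1704; 1768; 1772; 1644; 620];
[:: 706; 722; 726; 727; 1751; 1687; 1683; 1555; 531];
[:: 734; 718; 714; 715; 1739; 1675; 1679; 1551; 527];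
[:: 740; 756; 752; 753; 1777; 1713; 1717; 1589; 565];
[:: 760; 744; 748; 749; 1773; 1709; 1705; 1577; 553];
[:: 779; 795; 799; 798; 1822; 1886; 1882; 2010; 986];
[:: 791; 775; 771; 770; 1794; 1858; 1862; 1990; 966];
[:: 813; 829; 825; 824; 1848; 1912; 1916; 2044; 1020];
[:: 817; 801; 805; 804; 1828; 1892; 1888; 2016; 992];
[:: 846; 862; 858; 859; 1883; 1819; 1823; 1951; 927];
[:: 850; 834; 838; 839; 1863; 1799; 1795; 1923; 899];
[:: 872; 888; 892; 893; 1917; 1853; 1849; 1977; 953];
[:: 884; 868; 864; 865; 1889; 1825; 1829; 1957; 933];
[:: 896; 912; 916; 917; 1941; 2005; 2001; 1873; 849];
[:: 924; 908; 904; 905; 1929; 1993; 1997; 1869; 845];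
[:: 934; 950; 946; 947; 1971; 2035; 2039; 1911; 887];
[:: 954; 938; 942; 943; 1967; 2031; 2027; 1899; 875];
[:: 965; 981; 977; 976; 2000; 1936; 1940; 1812; 788];
[:: 985; 969; 973; 972; 1996; 1932; 1928; 1800; 776];
[:: 995; 1011; 1015; 1014; 2038; 1974; 1970; 1842; 818];
[:: 1023; 1007; 1003; 1002; 2026; 1962; 1966; 1838; 814];
[:: 1025; 1041; 1045; 1044; 20; 84; 80; 208; 1232];
[:: 1053; 1037; 1033; 1032; 8; 72; 76; 204; 1228];
[:: 1063; 1079; 1075; 1074; 50; 114; 118; 246; 1270];
[:: 1083; 1067; 1071; 1070; 46; 110; 106; 234; 1258];
[:: 1092; 1108; 1104; 1105; 81; 17; 21; 149; 1173];
[:: 1112; 1096; 1100; 1101; 77; 13; 9; 137; 1161];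
[:: 1122; 1138; 1142; 1143; 119; 55; 51; 179; 1203];
[:: 1150; 1134; 1130; 1131; 107; 43; 47; 175; 1199];
[:: 1162; 1178; 1182; 1183; 159; 223; 219; 91; 1115];
[:: 1174; 1158; 1154; 1155; 131; 195; 199; 71; 1095];
[:: 1196; 1212; 1208; 1209; 185; 249; 253; 125; 1149];
[:: 1200; 1184; 1188; 1189; 165; 229; 225; 97; 1121];
[:: 1231; 1247; 1243; 1242; 218; 154; 158; 30; 1054];
[:: 1235; 1219; 1223; 1222; 198; 134; 130; 2; 1026];
[:: 1257; 1273; 1277; 1276; 252; 188; 184; 56; 1080];
[:: 1269; 1253; 1249; 1248; 224; 160; 164; 36; 1060];
[:: 1286; 1302; 1298; 1299; 275; 339; 343; 471; 1495];
[:: 1306; 1290; 1294; 1295; 271; 335; 331; 459; 1483];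
[:: 1312; 1328; 1332; 1333; 309; 373; 369; 497; 1521];
[:: 1340; 1324; 1320; 1321; 297; 361; 365; 493; 1517];
[:: 1347; 1363; 1367; 1366; 342; 278; 274; 402; 1426];
[:: 1375; 1359; 1355; 1354; 330; 266; 270; 398; 1422];
[:: 1381; 1397; 1393; 1392; 368; 304; 308; 436; 1460];
[:: 1401; 1385; 1389; 1388; 364; 300; 296; 424; 1448];
[:: 1421; 1437; 1433; 1432; 408; 472; 476; 348; 1372];
[:: 1425; 1409; 1413; 1412; 388; 452; 448; 320; 1344];
[:: 1451; 1467; 1471; 1470; 446; 510; 506; 378; 1402];
[:: 1463; 1447; 1443; 1442; 418; 482; 486; 358; 1382];
[:: 1480; 1496; 1500; 1501; 477; 413; 409; 281; 1305];
[:: 1492; 1476; 1472; 1473; 449; 385; 389; 261; 1285];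
[:: 1518; 1534; 1530; 1531; 507; 443; 447; 319; 1343];
[:: 1522; 1506; 1510; 1511; 487; 423; 419; 291; 1315];
[:: 1551; 1567; 1563; 1562; 538; 602; 606; 734; 1758];
[:: 1555; 1539; 1543; 1542; 518; 582; 578; 706; 1730];
[:: 1577; 1593; 1597; 1596; 572; 636; 632; 760; 1784];
[:: 1589; 1573; 1569; 1568; 544; 608; 612; 740; 1764];
[:: 1610; 1626; 1630; 1631; 607; 543; 539; 667; 1691];
[:: 1622; 1606; 1602; 1603; 579; 515; 519; 647; 1671];
[:: 1644; 1660; 1656; 1657; 633; 569; 573; 701; 1725];
[:: 1648; 1632; 1636; 1637; 613; 549; 545; 673; 1697];
[:: 1668; 1684; 1680; 1681; 657; 721; 725; 597; 1621];
[:: 1688; 1672; 1676; 1677; 653; 717; 713; 585; 1609];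
[:: 1698; 1714; 1718; 1719; 695; 759; 755; 627; 1651];
[:: 1726; 1710; 1706; 1707; 683; 747; 751; 623; 1647];
[:: 1729; 1745; 1749; 1748; 724; 660; 656; 528; 1552];
[:: 1757; 1741; 1737; 1736; 712; 648; 652; 524; 1548];
[:: 1767; 1783; 1779; 1778; 754; 690; 694; 566; 1590];
[:: 1787; 1771; 1775; 1774; 750; 686; 682; 554; 1578];
[:: 1800; 1816; 1820; 1821; 797; 861; 857; 985; 2009];
[:: 1812; 1796; 1792; 1793; 769; 833; 837; 965; 1989];
[:: 1838; 1854; 1850; 1851; 827; 891; 895; 1023; 2047];
[:: 1842; 1826; 1830; 1831; 807; 871; 867; 995; 2019];
[:: 1869; 1885; 1881; 1880; 856; 792; 796; 924; 1948];
[:: 1873; 1857; 1861; 1860; 836; 772; 768; 896; 1920];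
[:: 1899; 1915; 1919; 1918; 894; 830; 826; 954; 1978];
[:: 1911; 1895; 1891; 1890; 866; 802; 806; 934; 1958];
[:: 1923; 1939; 1943; 1942; 918; 982; 978; 850; 1874];
[:: 1951; 1935; 1931; 1930; 906; 970; 974; 846; 1870];
[:: 1957; 1973; 1969; 1968; 944; 1008; 1012; 884; 1908];
[:: 1977; 1961; 1965; 1964; 940; 1004; 1000; 872; 1896];
[:: 1990; 2006; 2002; 2003; 979; 915; 919; 791; 1815];
[:: 2010; 1994; 1998; 1999; 975; 911; 907; 779; 1803];
[:: 2016; 2032; 2036; 2037; 1013; 949; 945; 817; 1841];
[:: 2044; 2028; 2024; 2025; 1001; 937; 941; 813; 1837];
[:: 13; 45; 61; 125; 93; 77; 79; 111; 47];
[:: 17; 49; 33; 97; 65; 81; 83; 115; 51];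
[:: 43; 11; 27; 91; 123; 107; 105; 73; 9];
[:: 55; 23; 7; 71; 103; 119; 117; 85; 21];
[:: 72; 104; 120; 56; 24; 8; 10; 42; 106];
[:: 84; 116; 100; 36; 4; 20; 22; 54; 118];
[:: 110; 78; 94; 30; 62; 46; 44; 12; 76];
[:: 114; 82; 66; 2; 34; 50; 48; 16; 80];
[:: 134; 166; 182; 246; 214; 198; 196; 228; 164];
[:: 154; 186; 170; 234; 202; 218; 216; 248; 184];
[:: 160; 128; 144; 208; 240; 224; 226; 194; 130];
[:: 188; 156; 140; 204; 236; 252; 254; 222; 158];
[:: 195; 227; 243; 179; 147; 131; 129; 161; 225];
[:: 223; 255; 239; 175; 143; 159; 157; 189; 253];
[:: 229; 197; 213; 149; 181; 165; 167; 135; 199];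
[:: 249; 217; 201; 137; 169; 185; 187; 155; 219];
[:: 266; 298; 314; 378; 346; 330; 328; 360; 296];
[:: 278; 310; 294; 358; 326; 342; 340; 372; 308];
[:: 300; 268; 284; 348; 380; 364; 366; 334; 270];
[:: 304; 272; 256; 320; 352; 368; 370; 338; 274];
[:: 335; 367; 383; 319; 287; 271; 269; 301; 365];
[:: 339; 371; 355; 291; 259; 275; 273; 305; 369];
[:: 361; 329; 345; 281; 313; 297; 299; 267; 331];
[:: 373; 341; 325; 261; 293; 309; 311; 279; 343];
[:: 385; 417; 433; 497; 465; 449; 451; 483; 419];
[:: 413; 445; 429; 493; 461; 477; 479; 511; 447];
[:: 423; 391; 407; 471; 503; 487; 485; 453; 389];
[:: 443; 411; 395; 459; 491; 507; 505; 473; 409];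
[:: 452; 484; 500; 436; 404; 388; 390; 422; 486];
[:: 472; 504; 488; 424; 392; 408; 410; 442; 506];
[:: 482; 450; 466; 402; 434; 418; 416; 384; 448];
[:: 510; 478; 462; 398; 430; 446; 444; 412; 476];
[:: 515; 547; 563; 627; 595; 579; 577; 609; 545];
[:: 543; 575; 559; 623; 591; 607; 605; 637; 573];
[:: 549; 517; 533; 597; 629; 613; 615; 583; 519];
[:: 569; 537; 521; 585; 617; 633; 635; 603; 539];
[:: 582; 614; 630; 566; 534; 518; 516; 548; 612];
[:: 602; 634; 618; 554; 522; 538; 536; 568; 632];
[:: 608; 576; 592; 528; 560; 544; 546; 514; 578];
[:: 636; 604; 588; 524; 556; 572; 574; 542; 606];
[:: 648; 680; 696; 760; 728; 712; 714; 746; 682];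
[:: 660; 692; 676; 740; 708; 724; 726; 758; 694];
[:: 686; 654; 670; 734; 766; 750; 748; 716; 652];
[:: 690; 658; 642; 706; 738; 754; 752; 720; 656];
[:: 717; 749; 765; 701; 669; 653; 655; 687; 751];
[:: 721; 753; 737; 673; 641; 657; 659; 691; 755];
[:: 747; 715; 731; 667; 699; 683; 681; 649; 713];
[:: 759; 727; 711; 647; 679; 695; 693; 661; 725];
[:: 772; 804; 820; 884; 852; 836; 838; 870; 806];
[:: 792; 824; 808; 872; 840; 856; 858; 890; 826];
[:: 802; 770; 786; 850; 882; 866; 864; 832; 768];
[:: 830; 798; 782; 846; 878; 894; 892; 860; 796];
[:: 833; 865; 881; 817; 785; 769; 771; 803; 867];
[:: 861; 893; 877; 813; 781; 797; 799; 831; 895];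
[:: 871; 839; 855; 791; 823; 807; 805; 773; 837];
[:: 891; 859; 843; 779; 811; 827; 825; 793; 857];
[:: 911; 943; 959; 1023; 991; 975; 973; 1005; 941];
[:: 915; 947; 931; 995; 963; 979; 977; 1009; 945];
[:: 937; 905; 921; 985; 1017; 1001; 1003; 971; 907];
[:: 949; 917; 901; 965; 997; 1013; 1015; 983; 919];
[:: 970; 1002; 1018; 954; 922; 906; 904; 936; 1000];
[:: 982; 1014; 998; 934; 902; 918; 916; 948; 1012];
[:: 1004; 972; 988; 924; 956; 940; 942; 910; 974];
[:: 1008; 976; 960; 896; 928; 944; 946; 914; 978];
[:: 1038; 1070; 1086; 1150; 1118; 1102; 1100; 1132; 1068];
[:: 1042; 1074; 1058; 1122; 1090; 1106; 1104; 1136; 1072];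
[:: 1064; 1032; 1048; 1112; 1144; 1128; 1130; 1098; 1034];
[:: 1076; 1044; 1028; 1092; 1124; 1140; 1142; 1110; 1046];
[:: 1099; 1131; 1147; 1083; 1051; 1035; 1033; 1065; 1129];
[:: 1111; 1143; 1127; 1063; 1031; 1047; 1045; 1077; 1141];
[:: 1133; 1101; 1117; 1053; 1085; 1069; 1071; 1039; 1103];
[:: 1137; 1105; 1089; 1025; 1057; 1073; 1075; 1043; 1107];
[:: 1157; 1189; 1205; 1269; 1237; 1221; 1223; 1255; 1191];
[:: 1177; 1209; 1193; 1257; 1225; 1241; 1243; 1275; 1211];
[:: 1187; 1155; 1171; 1235; 1267; 1251; 1249; 1217; 1153];
[:: 1215; 1183; 1167; 1231; 1263; 1279; 1277; 1245; 1181];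
[:: 1216; 1248; 1264; 1200; 1168; 1152; 1154; 1186; 1250];
[:: 1244; 1276; 1260; 1196; 1164; 1180; 1182; 1214; 1278];
[:: 1254; 1222; 1238; 1174; 1206; 1190; 1188; 1156; 1220];
[:: 1274; 1242; 1226; 1162; 1194; 1210; 1208; 1176; 1240];
[:: 1289; 1321; 1337; 1401; 1369; 1353; 1355; 1387; 1323];
[:: 1301; 1333; 1317; 1381; 1349; 1365; 1367; 1399; 1335];
[:: 1327; 1295; 1311; 1375; 1407; 1391; 1389; 1357; 1293];
[:: 1331; 1299; 1283; 1347; 1379; 1395; 1393; 1361; 1297];
[:: 1356; 1388; 1404; 1340; 1308; 1292; 1294; 1326; 1390];
[:: 1360; 1392; 1376; 1312; 1280; 1296; 1298; 1330; 1394];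
[:: 1386; 1354; 1370; 1306; 1338; 1322; 1320; 1288; 1352];
[:: 1398; 1366; 1350; 1286; 1318; 1334; 1332; 1300; 1364];
[:: 1410; 1442; 1458; 1522; 1490; 1474; 1472; 1504; 1440];
[:: 1438; 1470; 1454; 1518; 1486; 1502; 1500; 1532; 1468];
[:: 1444; 1412; 1428; 1492; 1524; 1508; 1510; 1478; 1414];
[:: 1464; 1432; 1416; 1480; 1512; 1528; 1530; 1498; 1434];
[:: 1479; 1511; 1527; 1463; 1431; 1415; 1413; 1445; 1509];
[:: 1499; 1531; 1515; 1451; 1419; 1435; 1433; 1465; 1529];
[:: 1505; 1473; 1489; 1425; 1457; 1441; 1443; 1411; 1475];
[:: 1533; 1501; 1485; 1421; 1453; 1469; 1471; 1439; 1503];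
[:: 1536; 1568; 1584; 1648; 1616; 1600; 1602; 1634; 1570];
[:: 1564; 1596; 1580; 1644; 1612; 1628; 1630; 1662; 1598];
[:: 1574; 1542; 1558; 1622; 1654; 1638; 1636; 1604; 1540];
[:: 1594; 1562; 1546; 1610; 1642; 1658; 1656; 1624; 1560];
[:: 1605; 1637; 1653; 1589; 1557; 1541; 1543; 1575; 1639];
[:: 1625; 1657; 1641; 1577; 1545; 1561; 1563; 1595; 1659];
[:: 1635; 1603; 1619; 1555; 1587; 1571; 1569; 1537; 1601];
[:: 1663; 1631; 1615; 1551; 1583; 1599; 1597; 1565; 1629];
[:: 1675; 1707; 1723; 1787; 1755; 1739; 1737; 1769; 1705];
[:: 1687; 1719; 1703; 1767; 1735; 1751; 1749; 1781; 1717];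
[:: 1709; 1677; 1693; 1757; 1789; 1773; 1775; 1743; 1679];
[:: 1713; 1681; 1665; 1729; 1761; 1777; 1779; 1747; 1683];
[:: 1742; 1774; 1790; 1726; 1694; 1678; 1676; 1708; 1772];
[:: 1746; 1778; 1762; 1698; 1666; 1682; 1680; 1712; 1776];
[:: 1768; 1736; 1752; 1688; 1720; 1704; 1706; 1674; 1738];
[:: 1780; 1748; 1732; 1668; 1700; 1716; 1718; 1686; 1750];
[:: 1799; 1831; 1847; 1911; 1879; 1863; 1861; 1893; 1829];
[:: 1819; 1851; 1835; 1899; 1867; 1883; 1881; 1913; 1849];
[:: 1825; 1793; 1809; 1873; 1905; 1889; 1891; 1859; 1795];
[:: 1853; 1821; 1805; 1869; 1901; 1917; 1919; 1887; 1823];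
[:: 1858; 1890; 1906; 1842; 1810; 1794; 1792; 1824; 1888];
[:: 1886; 1918; 1902; 1838; 1806; 1822; 1820; 1852; 1916];
[:: 1892; 1860; 1876; 1812; 1844; 1828; 1830; 1798; 1862];
[:: 1912; 1880; 1864; 1800; 1832; 1848; 1850; 1818; 1882];
[:: 1932; 1964; 1980; 2044; 2012; 1996; 1998; 2030; 1966];
[:: 1936; 1968; 1952; 2016; 1984; 2000; 2002; 2034; 1970];
[:: 1962; 1930; 1946; 2010; 2042; 2026; 2024; 1992; 1928];
[:: 1974; 1942; 1926; 1990; 2022; 2038; 2036; 2004; 1940];
[:: 1993; 2025; 2041; 1977; 1945; 1929; 1931; 1963; 2027];
[:: 2005; 2037; 2021; 1957; 1925; 1941; 1943; 1975; 2039];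
[:: 2031; 1999; 2015; 1951; 1983; 1967; 1965; 1933; 1997];
[:: 2035; 2003; 1987; 1923; 1955; 1971; 1969; 1937; 2001];
[:: 11; 15; 1039; 1167; 143; 655; 911; 909; 925];
[:: 23; 19; 1043; 1171; 147; 659; 915; 913; 897];
[:: 45; 41; 1065; 1193; 169; 681; 937; 939; 955];
[:: 49; 53; 1077; 1205; 181; 693; 949; 951; 935];
[:: 78; 74; 1098; 1226; 202; 714; 970; 968; 984];
[:: 82; 86; 1110; 1238; 214; 726; 982; 980; 964];
[:: 104; 108; 1132; 1260; 236; 748; 1004; 1006; 1022];
[:: 116; 112; 1136; 1264; 240; 752; 1008; 1010; 994];
[:: 128; 132; 1156; 1028; 4; 516; 772; 774; 790];
[:: 156; 152; 1176; 1048; 24; 536; 792; 794; 778];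
[:: 166; 162; 1186; 1058; 34; 546; 802; 800; 816];
[:: 186; 190; 1214; 1086; 62; 574; 830; 828; 812];
[:: 197; 193; 1217; 1089; 65; 577; 833; 835; 851];
[:: 217; 221; 1245; 1117; 93; 605; 861; 863; 847];
[:: 227; 231; 1255; 1127; 103; 615; 871; 869; 885];
[:: 255; 251; 1275; 1147; 123; 635; 891; 889; 873];
[:: 268; 264; 1288; 1416; 392; 904; 648; 650; 666];
[:: 272; 276; 1300; 1428; 404; 916; 660; 662; 646];
[:: 298; 302; 1326; 1454; 430; 942; 686; 684; 700];
[:: 310; 306; 1330; 1458; 434; 946; 690; 688; 672];
[:: 329; 333; 1357; 1485; 461; 973; 717; 719; 735];
[:: 341; 337; 1361; 1489; 465; 977; 721; 723; 707];
[:: 367; 363; 1387; 1515; 491; 1003; 747; 745; 761];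
[:: 371; 375; 1399; 1527; 503; 1015; 759; 757; 741];
[:: 391; 387; 1411; 1283; 259; 771; 515; 513; 529];
[:: 411; 415; 1439; 1311; 287; 799; 543; 541; 525];
[:: 417; 421; 1445; 1317; 293; 805; 549; 551; 567];
[:: 445; 441; 1465; 1337; 313; 825; 569; 571; 555];
[:: 450; 454; 1478; 1350; 326; 838; 582; 580; 596];
[:: 478; 474; 1498; 1370; 346; 858; 602; 600; 584];
[:: 484; 480; 1504; 1376; 352; 864; 608; 610; 626];
[:: 504; 508; 1532; 1404; 380; 892; 636; 638; 622];
[:: 517; 513; 1537; 1665; 641; 129; 385; 387; 403];
[:: 537; 541; 1565; 1693; 669; 157; 413; 415; 399];
[:: 547; 551; 1575; 1703; 679; 167; 423; 421; 437];
[:: 575; 571; 1595; 1723; 699; 187; 443; 441; 425];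
[:: 576; 580; 1604; 1732; 708; 196; 452; 454; 470];
[:: 604; 600; 1624; 1752; 728; 216; 472; 474; 458];
[:: 614; 610; 1634; 1762; 738; 226; 482; 480; 496];
[:: 634; 638; 1662; 1790; 766; 254; 510; 508; 492];
[:: 654; 650; 1674; 1546; 522; 10; 266; 264; 280];
[:: 658; 662; 1686; 1558; 534; 22; 278; 276; 260];
[:: 680; 684; 1708; 1580; 556; 44; 300; 302; 318];
[:: 692; 688; 1712; 1584; 560; 48; 304; 306; 290];
[:: 715; 719; 1743; 1615; 591; 79; 335; 333; 349];
[:: 727; 723; 1747; 1619; 595; 83; 339; 337; 321];
[:: 749; 745; 1769; 1641; 617; 105; 361; 363; 379];
[:: 753; 757; 1781; 1653; 629; 117; 373; 375; 359];
[:: 770; 774; 1798; 1926; 902; 390; 134; 132; 148];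
[:: 798; 794; 1818; 1946; 922; 410; 154; 152; 136];
[:: 804; 800; 1824; 1952; 928; 416; 160; 162; 178];
[:: 824; 828; 1852; 1980; 956; 444; 188; 190; 174];
[:: 839; 835; 1859; 1987; 963; 451; 195; 193; 209];
[:: 859; 863; 1887; 2015; 991; 479; 223; 221; 205];
[:: 865; 869; 1893; 2021; 997; 485; 229; 231; 247];
[:: 893; 889; 1913; 2041; 1017; 505; 249; 251; 235];
[:: 905; 909; 1933; 1805; 781; 269; 13; 15; 31];
[:: 917; 913; 1937; 1809; 785; 273; 17; 19; 3];
[:: 943; 939; 1963; 1835; 811; 299; 43; 41; 57];
[:: 947; 951; 1975; 1847; 823; 311; 55; 53; 37];
[:: 972; 968; 1992; 1864; 840; 328; 72; 74; 90];
[:: 976; 980; 2004; 1876; 852; 340; 84; 86; 70];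
[:: 1002; 1006; 2030; 1902; 878; 366; 110; 108; 124];
[:: 1014; 1010; 2034; 1906; 882; 370; 114; 112; 96];
[:: 1032; 1036; 12; 140; 1164; 1676; 1932; 1934; 1950];
[:: 1044; 1040; 16; 144; 1168; 1680; 1936; 1938; 1922];
[:: 1070; 1066; 42; 170; 1194; 1706; 1962; 1960; 1976];
[:: 1074; 1078; 54; 182; 1206; 1718; 1974; 1972; 1956];
[:: 1101; 1097; 73; 201; 1225; 1737; 1993; 1995; 2011];
[:: 1105; 1109; 85; 213; 1237; 1749; 2005; 2007; 1991];
[:: 1131; 1135; 111; 239; 1263; 1775; 2031; 2029; 2045];
[:: 1143; 1139; 115; 243; 1267; 1779; 2035; 2033; 2017];
[:: 1155; 1159; 135; 7; 1031; 1543; 1799; 1797; 1813];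
[:: 1183; 1179; 155; 27; 1051; 1563; 1819; 1817; 1801];
[:: 1189; 1185; 161; 33; 1057; 1569; 1825; 1827; 1843];
[:: 1209; 1213; 189; 61; 1085; 1597; 1853; 1855; 1839];
[:: 1222; 1218; 194; 66; 1090; 1602; 1858; 1856; 1872];
[:: 1242; 1246; 222; 94; 1118; 1630; 1886; 1884; 1868];
[:: 1248; 1252; 228; 100; 1124; 1636; 1892; 1894; 1910];
[:: 1276; 1272; 248; 120; 1144; 1656; 1912; 1914; 1898];
[:: 1295; 1291; 267; 395; 1419; 1931; 1675; 1673; 1689];
[:: 1299; 1303; 279; 407; 1431; 1943; 1687; 1685; 1669];
[:: 1321; 1325; 301; 429; 1453; 1965; 1709; 1711; 1727];
[:: 1333; 1329; 305; 433; 1457; 1969; 1713; 1715; 1699];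
[:: 1354; 1358; 334; 462; 1486; 1998; 1742; 1740; 1756];
[:: 1366; 1362; 338; 466; 1490; 2002; 1746; 1744; 1728];
[:: 1388; 1384; 360; 488; 1512; 2024; 1768; 1770; 1786];
[:: 1392; 1396; 372; 500; 1524; 2036; 1780; 1782; 1766];
[:: 1412; 1408; 384; 256; 1280; 1792; 1536; 1538; 1554];
[:: 1432; 1436; 412; 284; 1308; 1820; 1564; 1566; 1550];
[:: 1442; 1446; 422; 294; 1318; 1830; 1574; 1572; 1588];
[:: 1470; 1466; 442; 314; 1338; 1850; 1594; 1592; 1576];
[:: 1473; 1477; 453; 325; 1349; 1861; 1605; 1607; 1623];
[:: 1501; 1497; 473; 345; 1369; 1881; 1625; 1627; 1611];
[:: 1511; 1507; 483; 355; 1379; 1891; 1635; 1633; 1649];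
[:: 1531; 1535; 511; 383; 1407; 1919; 1663; 1661; 1645];
[:: 1542; 1538; 514; 642; 1666; 1154; 1410; 1408; 1424];
[:: 1562; 1566; 542; 670; 1694; 1182; 1438; 1436; 1420];
[:: 1568; 1572; 548; 676; 1700; 1188; 1444; 1446; 1462];
[:: 1596; 1592; 568; 696; 1720; 1208; 1464; 1466; 1450];
[:: 1603; 1607; 583; 711; 1735; 1223; 1479; 1477; 1493];
[:: 1631; 1627; 603; 731; 1755; 1243; 1499; 1497; 1481];
[:: 1637; 1633; 609; 737; 1761; 1249; 1505; 1507; 1523];
[:: 1657; 1661; 637; 765; 1789; 1277; 1533; 1535; 1519];
[:: 1677; 1673; 649; 521; 1545; 1033; 1289; 1291; 1307];
[:: 1681; 1685; 661; 533; 1557; 1045; 1301; 1303; 1287];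
[:: 1707; 1711; 687; 559; 1583; 1071; 1327; 1325; 1341];
[:: 1719; 1715; 691; 563; 1587; 1075; 1331; 1329; 1313];
[:: 1736; 1740; 716; 588; 1612; 1100; 1356; 1358; 1374];
[:: 1748; 1744; 720; 592; 1616; 1104; 1360; 1362; 1346];
[:: 1774; 1770; 746; 618; 1642; 1130; 1386; 1384; 1400];
[:: 1778; 1782; 758; 630; 1654; 1142; 1398; 1396; 1380];
[:: 1793; 1797; 773; 901; 1925; 1413; 1157; 1159; 1175];
[:: 1821; 1817; 793; 921; 1945; 1433; 1177; 1179; 1163];
[:: 1831; 1827; 803; 931; 1955; 1443; 1187; 1185; 1201];
[:: 1851; 1855; 831; 959; 1983; 1471; 1215; 1213; 1197];
[:: 1860; 1856; 832; 960; 1984; 1472; 1216; 1218; 1234];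
[:: 1880; 1884; 860; 988; 2012; 1500; 1244; 1246; 1230];
[:: 1890; 1894; 870; 998; 2022; 1510; 1254; 1252; 1268];
[:: 1918; 1914; 890; 1018; 2042; 1530; 1274; 1272; 1256];
[:: 1930; 1934; 910; 782; 1806; 1294; 1038; 1036; 1052];
[:: 1942; 1938; 914; 786; 1810; 1298; 1042; 1040; 1024];
[:: 1964; 1960; 936; 808; 1832; 1320; 1064; 1066; 1082];
[:: 1968; 1972; 948; 820; 1844; 1332; 1076; 1078; 1062];
[:: 1999; 1995; 971; 843; 1867; 1355; 1099; 1097; 1113];
[:: 2003; 2007; 983; 855; 1879; 1367; 1111; 1109; 1093];
[:: 2025; 2029; 1005; 877; 1901; 1389; 1133; 1135; 1151];
[:: 2037; 2033; 1009; 881; 1905; 1393; 1137; 1139; 1123]].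

Local Close Scope N_scope.

Lemma cube_decomposable_bits_of_N q m (paths : seq (seq N)) :
  certificate q m (map (map (bits_of_N q)) paths) -> cube_decomposable (path_rel m) q.
Proof. exact: cube_decomposable_certificate. Qed.

Lemma path4_cube4 : cube_decomposable (path_rel 4) 4.
Proof. by apply: (@cube_decomposable_bits_of_N _ _ paths4_cube4); vm_compute. Qed.

Lemma path4_cube5 : cube_decomposable (path_rel 4) 5.
Proof. by apply: (@cube_decomposable_bits_of_N _ _ paths4_cube5); vm_compute. Qed.

Lemma path4_cube6 : cube_decomposable (path_rel 4) 6.
Proof. by apply: (@cube_decomposable_bits_of_N _ _ paths4_cube6); vm_compute. Qed.

Lemma path4_cube7 : cube_decomposable (path_rel 4) 7.
Proof. by apply: (@cube_decomposable_bits_of_N _ _ paths4_cube7); vm_compute. Qed.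

Lemma path8_cube4 : cube_decomposable (path_rel 8) 4.
Proof. by apply: (@cube_decomposable_bits_of_N _ _ paths8_cube4); vm_compute. Qed.

Lemma path8_cube6 : cube_decomposable (path_rel 8) 6.
Proof. by apply: (@cube_decomposable_bits_of_N _ _ paths8_cube6); vm_compute. Qed.

Lemma path8_cube9 : cube_decomposable (path_rel 8) 9.
Proof. by apply: (@cube_decomposable_bits_of_N _ _ paths8_cube9); vm_compute. Qed.

Lemma path8_cube11 : cube_decomposable (path_rel 8) 11.
Proof. by apply: (@cube_decomposable_bits_of_N _ _ paths8_cube11); vm_compute. Qed.

Theorem corollary2 :
  (forall q : nat, 4 <= q -> divides (path_rel 4) (cube_rel q)) /\
  (forall q : nat, 8 <= q -> divides (path_rel 8) (cube_rel q)).
Proof.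
split=> q le_q; apply: cube_decomposable_divides (@path_rel_sym _) _; move: q le_q.
- apply: (cube_decomposable_from (@path_rel_irr 4) path4_cube4 isT) => q /andP [? ?].
  have: q \in [:: 4; 5; 6; 7] by rewrite !inE; lia.
  by rewrite !inE => /or4P [] /eqP ->; [exact: path4_cube4 | exact: path4_cube5 |
                                         exact: path4_cube6 | exact: path4_cube7].
- apply: (cube_decomposable_from (@path_rel_irr 8) path8_cube4 isT) => q /andP [? ?].
  have: q \in [:: 8; 9; 10; 11] by rewrite !inE; lia.
  rewrite !inE => /or4P [] /eqP ->; [| exact: path8_cube9 | | exact: path8_cube11].
  + exact: (cube_decomposable_add (@path_rel_irr 8) path8_cube4 path8_cube4).
  + exact: (cube_decomposable_add (@path_rel_irr 8) path8_cube4 path8_cube6).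
Qed.
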